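(* Let $\lambda,\mu\in\Lambda$, $g\in\mathcal{D}_{\lambda\mu}$ and $A=\kappa(\lambda,g,\mu)$. Then $W_{\delta(A)}=g^{-1}W_\lambda g\cap W_\mu$.
   Context: Fix integers $r\ge 0$, $d\ge 2$, $n=2r+2$, $D=2d+2$. $W$ is the group of bijections $g:\mathbb{Z}\to\mathbb{Z}$ with $g(i+D)=g(i)+D$, $g(-i)=-g(i)$; it is a Coxeter group with simple reflections $s_0,\dots,s_d$ where (elements determined by values on $1,\dots,d$) $s_0(1)=-1$, $s_0(k)=k$ ($k\ge2$); $s_d(d)=d+2$, $s_d(k)=k$ ($k<d$); $s_i$ ($1\le i\le d-1$) swaps $i,i+1$. $\ell$ is Coxeter length. For $r'\ge 0$ let $\Lambda_{r',d}$ be the set of $\lambda=(\lambda_0,\dots,\lambda_{r'+1})\in\mathbb{N}^{r'+2}$ with sum $d$, and $\Lambda=\Lambda_{r,d}$. For $\lambda\in\Lambda_{r',d}$ put $\lambda_{0,i}=\lambda_0+\dots+\lambda_i$, let $W_\lambda$ be generated by $\{s_0,\dots,s_d\}\setminus\{s_{\lambda_{0,0}},\dots,s_{\lambda_{0,r'}}\}$, and define intervals $R_0^\lambda=[-\lambda_0..\lambda_0]$, $R_i^\lambda=(\lambda_{0,i-1}..\lambda_{0,i}]$ ($1\le i\le r'$), $R^\lambda_{r'+1}=[d+1-\lambda_{r'+1}..d+1+\lambda_{r'+1}]$, extended by $R^\lambda_{-i}=-R^\lambda_i$, $R^\lambda_{i+2r'+2}=R^\lambda_i+D$. Let $\mathcal{D}_\lambda=\{g\in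 W\mid\ell(wg)=\ell(w)+\ell(g)\ \forall w\in W_\lambda\}$ and $\mathcal{D}_{\lambda\mu}=\mathcal{D}_\lambda\cap\mathcal{D}_\mu^{-1}$. For $\lambda,\mu\in\Lambda$, $g\in W$, $\kappa(\lambda,g,\mu)$ is the $\mathbb{Z}\times\mathbb{Z}$ matrix with $(i,j)$-entry $|R_i^\lambda\cap g(R_j^\mu)|$. For such a matrix $A=(a_{ij})$ (which satisfies $a_{-i,-j}=a_{ij}=a_{i+n,j+n}$ with $a_{00},a_{r+1,r+1}$ odd) set $a'_{ii}=(a_{ii}-1)/2$ for $i\in\{0,r+1\}$. Define $\delta(A)$: choose $k_j\ge0$ ($0\le j\le r+1$) with $a_{ij}=0$ unless $|i-j|\le k_j$; $\delta(A)\in\Lambda_{\mathfrak r,d}$ with $\mathfrak r=k_0+\sum_{j=1}^r(2k_j+1)+k_{r+1}$ is the sequence consisting of $a'_{00},a_{10},a_{20},\dots,a_{k_0,0}$, followed, for $j=1,\dots,r$ in turn, by $a_{ij}$ for $i=j-k_j,j-k_j+1,\dots,j+k_j$, followed by $a_{r+1-k_{r+1},r+1},\dots,a_{r,r+1},a'_{r+1,r+1}$. (The subgroup $W_{\delta(A)}$ does not depend on the choice of the $k_j$.) *)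

From Stdlib Require Import ZArith List Arith.
Import ListNotations.
Open Scope Z_scope.

Definition DD (d : nat) : Z := 2 * Z.of_nat d + 2.

(* The unique element g of W with g(k) = v k for 1 <= k <= d:
   g(qD + r) = qD + r for r = 0, d+1; qD + v r for 1 <= r <= d;
   (q+1)D - v (D - r) for d+2 <= r <= 2d+1. *)
Definition ext (d : nat) (v : Z -> Z) (x : Z) : Z :=
  let D := DD d in
  let q := x / D in
  let rr := x mod D in
  if rr =? 0 then x
  else if rr <=? Z.of_nat d then q * D + v rr
  else if rr =? Z.of_nat d + 1 then x
  else q * D + D - v (D - rr).

Definition sref (d : nat) (i : nat) : Z -> Z :=
  if Nat.eqb i 0 then ext d (fun k => if k =? 1 then -1 else k)
  else if Nat.eqb i d then
    ext d (fun k => if k =? Z.of_nat d then Z.of_nat d + 2 else k)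
  else
    ext d (fun k => if k =? Z.of_nat i then Z.of_nat i + 1
                    else if k =? Z.of_nat i + 1 then Z.of_nat i else k).

Fixpoint word (d : nat) (l : list nat) : Z -> Z :=
  match l with
  | [] => fun x => x
  | i :: l' => fun x => sref d i (word d l' x)
  end.

Definition in_W (d : nat) (g : Z -> Z) : Prop :=
  (exists ginv : Z -> Z, (forall x, ginv (g x) = x) /\ (forall x, g (ginv x) = x)) /\
  (forall i, g (i + DD d) = g i + DD d) /\
  (forall i, g (- i) = - g i).

Definition is_len (d : nat) (g : Z -> Z) (n : nat) : Prop :=
  (exists l : list nat, (forall i, In i l -> (i <= d)%nat) /\
     length l = n /\ (forall x, word d l x = g x)) /\
  (forall l : list nat, (forall i, In i l -> (i <= d)%nat) ->
     (forall x, word d l x = g x) -> (n <= length l)%nat).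

Definition psum (lam : list nat) (i : nat) : nat :=
  fold_right Nat.add 0%nat (firstn (S i) lam).

Definition in_Lambda (rp d : nat) (lam : list nat) : Prop :=
  length lam = (rp + 2)%nat /\ fold_right Nat.add 0%nat lam = d.

(* s_j is removed from the generators of W_lambda iff j = lambda_{0,i} for
   some 0 <= i <= r' (where length lam = r'+2). *)
Definition excluded (lam : list nat) (j : nat) : Prop :=
  exists i, (i < length lam - 1)%nat /\ psum lam i = j.

Definition in_Wsub (d : nat) (lam : list nat) (h : Z -> Z) : Prop :=
  exists l : list nat,
    (forall i, In i l -> (i <= d)%nat /\ ~ excluded lam i) /\
    (forall x, word d l x = h x).

Definition in_Dl (d : nat) (lam : list nat) (g : Z -> Z) : Prop :=
  in_W d g /\
  forall w, in_Wsub d lam w ->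
    forall a b c : nat, is_len d w a -> is_len d g b ->
      is_len d (fun x => w (g x)) c -> c = (a + b)%nat.

Definition in_Dlm (d : nat) (lam mu : list nat) (g : Z -> Z) : Prop :=
  in_Dl d lam g /\
  exists ginv : Z -> Z, (forall x, ginv (g x) = x) /\ (forall x, g (ginv x) = x)
                        /\ in_Dl d mu ginv.

Definition zrange (a b : Z) : list Z :=
  map (fun t => a + Z.of_nat t) (seq 0 (Z.to_nat (b - a + 1))).

Definition Rbase (d rp : nat) (lam : list nat) (i : nat) : list Z :=
  if Nat.eqb i 0 then zrange (- Z.of_nat (nth 0%nat lam 0%nat)) (Z.of_nat (nth 0%nat lam 0%nat))
  else if Nat.leb i rp then
    zrange (Z.of_nat (psum lam (i - 1)) + 1) (Z.of_nat (psum lam i))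
  else zrange (Z.of_nat d + 1 - Z.of_nat (nth (rp + 1)%nat lam 0%nat))
              (Z.of_nat d + 1 + Z.of_nat (nth (rp + 1)%nat lam 0%nat)).

(* R_i^lambda for all i in Z, via R_{-i} = -R_i and R_{i+2r'+2} = R_i + D *)
Definition Rint (d rp : nat) (lam : list nat) (i : Z) : list Z :=
  let np := 2 * Z.of_nat rp + 2 in
  let q := i / np in
  let rr := i mod np in
  if rr <=? Z.of_nat rp + 1 then
    map (fun x => x + q * DD d) (Rbase d rp lam (Z.to_nat rr))
  else map (fun x => - x + (q + 1) * DD d) (Rbase d rp lam (Z.to_nat (np - rr))).

Definition kappa (d r : nat) (lam : list nat) (g : Z -> Z) (mu : list nat)
  (i j : Z) : nat :=
  length (filter (fun x => existsb (fun y => g y =? x) (Rint d r mu j))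
                 (Rint d r lam i)).

Definition aprime (A : Z -> Z -> nat) (i : Z) : nat := ((A i i - 1) / 2)%nat.

Definition valid_k (r : nat) (A : Z -> Z -> nat) (k : nat -> nat) : Prop :=
  forall (i : Z) (j : nat), (j <= r + 1)%nat -> A i (Z.of_nat j) <> 0%nat ->
    Z.abs (i - Z.of_nat j) <= Z.of_nat (k j).

Definition delta (r : nat) (A : Z -> Z -> nat) (k : nat -> nat) : list nat :=
  (aprime A 0 :: map (fun t => A (Z.of_nat t) 0) (seq 1 (k 0%nat)))
  ++ concat (map (fun j => map (fun t => A (Z.of_nat j - Z.of_nat (k j) + Z.of_nat t)
                                           (Z.of_nat j))
                              (seq 0 (2 * k j + 1)))
                 (seq 1 r))
  ++ (map (fun t => A (Z.of_nat r + 1 - Z.of_nat (k (r + 1)%nat) + Z.of_nat t)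
                      (Z.of_nat r + 1))
          (seq 0 (k (r + 1)%nat))
      ++ [aprime A (Z.of_nat r + 1)]).

(* Write [block nu x] for the index [i] of the interval [R_i^nu] containing [x]; it is
   monotone, odd and quasi-periodic.  The parabolic subgroup [W_nu] is exactly the stabiliser of
   [block nu] in [W]: the hard inclusion is an induction on the Coxeter length, which is computed
   as half an inversion count.  Hence [g^-1 W_lam g ∩ W_mu] is the common stabiliser of [block mu]
   and [block lam ∘ g], i.e. of the partition of [Z] into the cells [R_j^mu ∩ g^-1 R_i^lam].
   As [g^-1] is minimal in its coset [W_mu g^-1], [g] is increasing on each [R_j^mu], so the cells
   are intervals.  Listing the sizes of the cells met by [1..d], column after column, gives
   exactly [delta(A)], and the block function of [delta(A)] separates precisely the cells. *)

From Stdlib Require Import ZArith List Arith Lia Permutation.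
Import ListNotations.
Open Scope Z_scope.

Ltac case_Z_tests := repeat match goal with
  | |- context [if (?a =? ?b) then _ else _] => destruct (Z.eqb_spec a b)
  | |- context [if (?a <=? ?b) then _ else _] => destruct (Z.leb_spec a b)
  | |- context [if (?a <? ?b) then _ else _] => destruct (Z.ltb_spec a b)
  end.

Lemma bounded_forall_dec (P : nat -> Prop) (Pd : forall j, {P j} + {~ P j}) n :
  (exists j, (j <= n)%nat /\ ~ P j) \/ (forall j, (j <= n)%nat -> P j).
Proof.
  induction n as [|n IH].
  - destruct (Pd 0%nat); [right; intros j Hj; replace j with 0%nat by lia; auto|left; exists 0%nat; split; auto].
  - destruct IH as [[j [Hj HP]]|IH]; [left; exists j; split; auto|].
    destruct (Pd (S n)); [right; intros j Hj; destruct (Nat.eq_dec j (S n)); [subst; auto|apply IH; lia]|].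
    left; exists (S n); split; auto.
Qed.

Definition zsum {A} (f : A -> Z) (l : list A) : Z := fold_right (fun a acc => f a + acc) 0 l.

Lemma zsum_cons {A} (f : A -> Z) a l : zsum f (a :: l) = f a + zsum f l.
Proof. reflexivity. Qed.

Lemma zsum_nil {A} (f : A -> Z) : zsum f [] = 0.
Proof. reflexivity. Qed.

Lemma zsum_app {A} (f : A -> Z) l1 l2 : zsum f (l1 ++ l2) = zsum f l1 + zsum f l2.
Proof. induction l1; simpl; [lia|]. rewrite IHl1; lia. Qed.

Lemma zsum_map {A B} (f : B -> Z) (g : A -> B) l : zsum f (map g l) = zsum (fun x => f (g x)) l.
Proof. induction l; simpl; congruence. Qed.

Lemma zsum_perm {A} (f : A -> Z) l1 l2 : Permutation l1 l2 -> zsum f l1 = zsum f l2.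
Proof. induction 1; simpl; lia. Qed.

Lemma zsum_ext_in {A} (f g : A -> Z) l : (forall x, In x l -> f x = g x) -> zsum f l = zsum g l.
Proof. induction l; simpl; intros H; auto. rewrite H, IHl; auto. Qed.

Lemma zsum_sub {A} (f g : A -> Z) l : zsum (fun x => f x - g x) l = zsum f l - zsum g l.
Proof. induction l; simpl; lia. Qed.

Lemma zsum_zero {A} (f : A -> Z) l : (forall x, In x l -> f x = 0) -> zsum f l = 0.
Proof. induction l; simpl; intros H; auto. rewrite H, IHl; auto. Qed.

Lemma zsum_nonneg {A} (f : A -> Z) l : (forall x, 0 <= f x) -> 0 <= zsum f l.
Proof. intros H; induction l as [|a l IH]; simpl; [lia|]. specialize (H a); lia. Qed.

Lemma zsum_filter {A} (f : A -> Z) (p : A -> bool) l :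
  (forall x, In x l -> p x = false -> f x = 0) -> zsum f l = zsum f (filter p l).
Proof.
  induction l as [|a l IH]; simpl; intros H; auto.
  destruct (p a) eqn:E; simpl; rewrite IH; auto. rewrite H; auto.
Qed.

Lemma zsum_support (f : Z -> Z) L S : NoDup L -> NoDup S -> incl S L ->
  (forall x, In x L -> ~ In x S -> f x = 0) -> zsum f L = zsum f S.
Proof.
  intros HL HS Hinc Hz.
  rewrite (zsum_filter f (fun x => if in_dec Z.eq_dec x S then true else false) L).
  - apply zsum_perm, NoDup_Permutation; auto using NoDup_filter.
    intros x. rewrite filter_In. destruct (in_dec Z.eq_dec x S); split; intuition; discriminate.
  - intros x Hx. destruct (in_dec Z.eq_dec x S); [discriminate|]. auto.
Qed.

Lemma zsum_support1 (f : Z -> Z) L a : NoDup L -> In a L ->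
  (forall x, In x L -> x <> a -> f x = 0) -> zsum f L = f a.
Proof.
  intros HL Ha Hz. rewrite (zsum_support f L [a]).
  - simpl. lia.
  - exact HL.
  - repeat constructor. intros [].
  - intros x [<-|[]]; auto.
  - intros x Hx Hn. apply Hz; simpl in Hn; intuition.
Qed.

Lemma zsum_reindex (f : Z -> Z) (s : Z -> Z) L : NoDup L -> (forall x, s (s x) = x) ->
  (forall a, In a L -> In (s a) L) -> zsum f L = zsum (fun x => f (s x)) L.
Proof.
  intros HL Hs Hp. rewrite <- (zsum_map f s L). apply zsum_perm, Permutation_sym, NoDup_Permutation; auto.
  - apply FinFun.Injective_map_NoDup; auto. intros x y E. rewrite <- (Hs x), <- (Hs y), E; auto.
  - intros x. rewrite in_map_iff. split; [intros [a [<- Ha]]; auto|intros Hx; exists (s x); auto].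
Qed.

Lemma zrange_length a b : length (zrange a b) = Z.to_nat (b - a + 1).
Proof. unfold zrange. rewrite length_map, length_seq. reflexivity. Qed.

Lemma In_zrange x a b : In x (zrange a b) <-> a <= x <= b.
Proof.
  unfold zrange. rewrite in_map_iff. split.
  - intros [t [<- Ht]]. apply in_seq in Ht. lia.
  - intros H. exists (Z.to_nat (x - a)). split; [lia|]. apply in_seq. lia.
Qed.

Lemma NoDup_zrange a b : NoDup (zrange a b).
Proof.
  unfold zrange. apply FinFun.Injective_map_NoDup; [intros x y E; lia|apply seq_NoDup].
Qed.

Lemma map_seq_offset {B} (f : nat -> B) s n :
  map f (seq s n) = map (fun t => f (s + t)%nat) (seq 0 n).
Proof.
  revert s; induction n as [|n IH]; intros s; simpl; auto.
  rewrite Nat.add_0_r, IH, <- seq_shift, map_map. f_equal. apply map_ext. intros t. f_equal. lia.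
Qed.

Lemma map_seq_eq {B} (F G : nat -> B) a b n :
  (forall t, (t < n)%nat -> F (a + t)%nat = G (b + t)%nat) -> map F (seq a n) = map G (seq b n).
Proof.
  intros H. rewrite (map_seq_offset F), (map_seq_offset G). apply map_ext_in.
  intros t Ht. apply in_seq in Ht. apply H. lia.
Qed.

Lemma zrange_split a m b : a <= m <= b + 1 -> zrange a b = zrange a (m - 1) ++ zrange m b.
Proof.
  intros H. unfold zrange.
  replace (Z.to_nat (b - a + 1)) with (Z.to_nat (m - 1 - a + 1) + Z.to_nat (b - m + 1))%nat by lia.
  rewrite seq_app, map_app. f_equal. apply map_seq_eq. intros t _. lia.
Qed.

Lemma length_filter_all {A} (p : A -> bool) l :
  (forall x, In x l -> p x = true) -> length (filter p l) = length l.
Proof. intros H. rewrite forallb_filter_id; auto. apply forallb_forall. auto. Qed.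

Lemma length_filter_none {A} (p : A -> bool) l :
  (forall x, In x l -> p x = false) -> length (filter p l) = 0%nat.
Proof. induction l; simpl; intros H; auto. rewrite H by auto. apply IHl; auto. Qed.

Lemma length_filter_or {A} (p q : A -> bool) l : (forall x, In x l -> p x = true -> q x = false) ->
  length (filter (fun x => orb (p x) (q x)) l) = (length (filter p l) + length (filter q l))%nat.
Proof.
  induction l; simpl; intros H; auto.
  destruct (p a) eqn:E1; destruct (q a) eqn:E2; simpl; try rewrite IHl; auto.
  rewrite H in E2; auto; discriminate.
Qed.

Lemma length_filter_ext {A} (p q : A -> bool) l : (forall x, In x l -> p x = q x) ->
  length (filter p l) = length (filter q l).
Proof. intros H. rewrite (filter_ext_in p q l H). reflexivity. Qed.

Lemma count_lt_seq (c : Z) (n : nat) : 0 <= c <= Z.of_nat n ->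
  length (filter (fun i => Z.of_nat i <? c) (seq 0 n)) = Z.to_nat c.
Proof.
  intros H. replace n with (Z.to_nat c + (n - Z.to_nat c))%nat by lia.
  rewrite seq_app, filter_app, length_app, length_filter_all, length_filter_none, length_seq; [lia| |].
  - intros x Hx. apply in_seq in Hx. apply Z.ltb_ge. lia.
  - intros x Hx. apply in_seq in Hx. apply Z.ltb_lt. lia.
Qed.

Lemma NoDup_same_length (L1 L2 : list Z) : NoDup L1 -> NoDup L2 -> (forall x, In x L1 <-> In x L2) ->
  length L1 = length L2.
Proof. intros. apply Permutation_length, NoDup_Permutation; auto. Qed.

Lemma firstn_seq n s m : firstn n (seq s m) = seq s (Nat.min n m).
Proof.
  revert n s; induction m as [|m IH]; intros n s; [destruct n; reflexivity|].
  destruct n; simpl; [reflexivity|]. f_equal. apply IH.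
Qed.

Lemma psum_cons0 a l : psum (a :: l) 0 = a.
Proof. unfold psum. simpl. lia. Qed.

Lemma psum_0 l : psum l 0 = nth 0 l 0%nat.
Proof. destruct l; [reflexivity|]. apply psum_cons0. Qed.

Lemma psum_consS a l i : psum (a :: l) (S i) = (a + psum l i)%nat.
Proof. reflexivity. Qed.

Lemma psum_S l i : psum l (S i) = (psum l i + nth (S i) l 0)%nat.
Proof.
  revert i; induction l as [|a l IH]; intros i; [destruct i; reflexivity|].
  destruct i; [rewrite psum_consS, psum_cons0; unfold psum; simpl; destruct l; simpl; lia|].
  rewrite !psum_consS, IH. simpl. lia.
Qed.

Lemma psum_mono l i j : (i <= j)%nat -> (psum l i <= psum l j)%nat.
Proof. induction 1; auto. rewrite psum_S. lia. Qed.

Lemma psum_le_sum l i : (psum l i <= list_sum l)%nat.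
Proof.
  revert i; induction l as [|a l IH]; intros i; [destruct i; reflexivity|].
  destruct i; [rewrite psum_cons0; simpl; lia|]. rewrite psum_consS. simpl. specialize (IH i). lia.
Qed.

Lemma psum_last l i : (length l <= S i)%nat -> psum l i = list_sum l.
Proof. intros H. unfold psum, list_sum. rewrite firstn_all2; auto. Qed.

Lemma excluded_dec (nu : list nat) (j : nat) : excluded nu j \/ ~ excluded nu j.
Proof.
  destruct (in_dec Nat.eq_dec j (map (psum nu) (seq 0 (length nu - 1)))) as [H|H]; [left|right].
  - apply in_map_iff in H. destruct H as [i [E Hi]]. apply in_seq in Hi. exists i. split; [lia|auto].
  - intros [i [Hi E]]. apply H, in_map_iff. exists i. split; auto. apply in_seq. lia.
Qed.

(** * The group [W] *)

Section AffineC.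
Variable d : nat.
Hypothesis hd : (2 <= d)%nat.
Local Notation D := (DD d).
Local Notation dz := (Z.of_nat d).

Lemma DD_pos : 0 < D.
Proof. unfold DD; lia. Qed.

Lemma DD_euclid x : exists q rr, x = q * D + rr /\ 0 <= rr < D.
Proof.
  exists (x / D), (x mod D). pose proof DD_pos.
  split; [rewrite Z.mul_comm; apply Z.div_mod; lia|apply Z.mod_pos_bound; lia].
Qed.

Lemma DD_div_mod q rr : 0 <= rr < D -> (q * D + rr) / D = q /\ (q * D + rr) mod D = rr.
Proof.
  intros H. pose proof DD_pos. split.
  - rewrite Z.div_add_l, Z.div_small by lia. lia.
  - rewrite Z.add_comm, Z.mod_add, Z.mod_small by lia. lia.
Qed.

Definition periodic_odd (f : Z -> Z) : Prop :=
  (forall x, f (x + D) = f x + D) /\ (forall x, f (- x) = - f x).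

Lemma periodic_odd_shift f : periodic_odd f -> forall q x, f (x + q * D) = f x + q * D.
Proof.
  intros [Hp _].
  assert (Hn : forall (n : nat) x, f (x + Z.of_nat n * D) = f x + Z.of_nat n * D).
  { induction n as [|n IH]; intros x; [rewrite !Z.add_0_r; reflexivity|].
    replace (x + Z.of_nat (S n) * D) with ((x + Z.of_nat n * D) + D) by lia. rewrite Hp, IH. lia. }
  intros q x. destruct (Z_le_gt_dec 0 q).
  - replace q with (Z.of_nat (Z.to_nat q)) by lia. apply Hn.
  - specialize (Hn (Z.to_nat (- q)) (x + q * D)).
    replace (x + q * D + Z.of_nat (Z.to_nat (- q)) * D) with x in Hn by lia. lia.
Qed.

Lemma periodic_odd_0 f : periodic_odd f -> f 0 = 0.
Proof. intros [_ Ho]. specialize (Ho 0). simpl in Ho. lia. Qed.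

Lemma periodic_odd_mirror f x : periodic_odd f -> f (D - x) = D - f x.
Proof. intros [Hp Ho]. replace (D - x) with (- x + D) by lia. rewrite Hp, Ho. lia. Qed.

Lemma periodic_odd_mid f : periodic_odd f -> f (dz + 1) = dz + 1.
Proof.
  intros Hf. pose proof (periodic_odd_mirror f (dz + 1) Hf). unfold DD in *.
  replace (2 * dz + 2 - (dz + 1)) with (dz + 1) in H by lia. lia.
Qed.

Lemma periodic_odd_comp f g : periodic_odd f -> periodic_odd g -> periodic_odd (fun x => f (g x)).
Proof. intros [A B] [C E]; split; intros x; [rewrite C, A|rewrite E, B]; auto. Qed.

Lemma periodic_odd_id : periodic_odd (fun x => x).
Proof. split; intros; lia. Qed.

(* Periodic odd functions fix [0] and [d+1]. *)
Lemma periodic_odd_eq f g : periodic_odd f -> periodic_odd g ->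
  (forall a, 1 <= a <= dz -> f a = g a) -> forall x, f x = g x.
Proof.
  intros Hf Hg H x.
  destruct (DD_euclid x) as [q [rr [-> Hr]]].
  rewrite Z.add_comm, (periodic_odd_shift f Hf), (periodic_odd_shift g Hg). f_equal.
  destruct (Z.eq_dec rr 0) as [->|]; [rewrite !periodic_odd_0; auto|].
  destruct (Z_le_gt_dec rr dz); [apply H; lia|].
  destruct (Z.eq_dec rr (dz + 1)) as [->|]; [rewrite !periodic_odd_mid; auto|].
  replace rr with (D - (D - rr)) by lia.
  rewrite (periodic_odd_mirror f), (periodic_odd_mirror g), H; auto. unfold DD in *; lia.
Qed.

Lemma ext_periodic_odd v : periodic_odd (ext d v).
Proof.
  pose proof DD_pos. split; intros x; destruct (DD_euclid x) as [q [rr [-> Hr]]].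
  - replace (q * D + rr + D) with ((q + 1) * D + rr) by lia. unfold ext; cbv zeta.
    destruct (DD_div_mod q rr Hr) as [-> ->]. destruct (DD_div_mod (q + 1) rr Hr) as [-> ->].
    case_Z_tests; lia.
  - unfold ext; cbv zeta. destruct (DD_div_mod q rr Hr) as [-> ->].
    destruct (Z.eq_dec rr 0) as [->|Hr0].
    + replace (- (q * D + 0)) with ((- q) * D + 0) by lia.
      destruct (DD_div_mod (- q) 0) as [-> ->]; [lia|]. simpl. lia.
    + replace (- (q * D + rr)) with ((- q - 1) * D + (D - rr)) by lia.
      destruct (DD_div_mod (- q - 1) (D - rr)) as [-> ->]; [lia|].
      replace (D - (D - rr)) with rr by lia. unfold DD in *. case_Z_tests; lia.
Qed.

Lemma ext_val v a : 1 <= a <= dz -> ext d v a = v a.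
Proof.
  intros Ha. destruct (DD_div_mod 0 a) as [E1 E2]; [unfold DD; lia|].
  simpl in E1, E2. unfold ext; cbv zeta. rewrite E1, E2. case_Z_tests; lia.
Qed.

Definition sref_base (j : nat) (k : Z) : Z :=
  if Nat.eqb j 0 then (if k =? 1 then -1 else k)
  else if Nat.eqb j d then (if k =? dz then dz + 2 else k)
  else (if k =? Z.of_nat j then Z.of_nat j + 1 else if k =? Z.of_nat j + 1 then Z.of_nat j else k).

Lemma sref_ext j : sref d j = ext d (sref_base j).
Proof.
  unfold sref, sref_base. destruct (Nat.eqb j 0); [reflexivity|]. destruct (Nat.eqb j d); reflexivity.
Qed.

Lemma sref_periodic_odd j : periodic_odd (sref d j).
Proof. rewrite sref_ext. apply ext_periodic_odd. Qed.

Lemma sref_val j a : 1 <= a <= dz -> sref d j a = sref_base j a.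
Proof. rewrite sref_ext. apply ext_val. Qed.

Lemma sref_invol j x : (j <= d)%nat -> sref d j (sref d j x) = x.
Proof.
  intros Hj. revert x.
  apply (periodic_odd_eq _ _ (periodic_odd_comp _ _ (sref_periodic_odd j) (sref_periodic_odd j))
           periodic_odd_id).
  intros a Ha. destruct (sref_periodic_odd j) as [Hp Ho].
  rewrite (sref_val j a Ha). unfold sref_base.
  destruct (Nat.eqb_spec j 0) as [->|Hj0]; [|destruct (Nat.eqb_spec j d) as [->|Hjd]].
  - destruct (Z.eqb_spec a 1) as [->|].
    + simpl. change (-1) with (- (1)). rewrite Ho, sref_val by lia. reflexivity.
    + rewrite sref_val by lia. unfold sref_base; simpl. case_Z_tests; lia.
  - destruct (Z.eqb_spec a dz) as [->|].
    + replace (dz + 2) with (D - dz) by (unfold DD; lia).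
      rewrite periodic_odd_mirror, sref_val by (auto using sref_periodic_odd; lia). unfold sref_base.
      rewrite Nat.eqb_refl. destruct (Nat.eqb_spec d 0); [lia|]. rewrite Z.eqb_refl. unfold DD; lia.
    + rewrite sref_val by lia. unfold sref_base. rewrite Nat.eqb_refl.
      destruct (Nat.eqb_spec d 0); [lia|]. case_Z_tests; lia.
  - case_Z_tests; (rewrite sref_val by lia; unfold sref_base;
      destruct (Nat.eqb_spec j 0); [lia|]; destruct (Nat.eqb_spec j d); [lia|]; case_Z_tests; lia).
Qed.

Lemma in_W_periodic_odd y : in_W d y -> periodic_odd y.
Proof. intros [_ [A B]]; split; auto. Qed.

Lemma in_W_inj y a b : in_W d y -> y a = y b -> a = b.
Proof. intros [[yi [H1 _]] _] E. rewrite <- (H1 a), <- (H1 b), E. reflexivity. Qed.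

Lemma in_W_ext y y' : (forall x, y x = y' x) -> in_W d y' -> in_W d y.
Proof.
  intros E [[yi [H1 H2]] [Hp Ho]]. split; [exists yi; split; intros x; rewrite ?E; auto|].
  split; intros x; rewrite !E; auto.
Qed.

Lemma in_W_comp f g : in_W d f -> in_W d g -> in_W d (fun x => f (g x)).
Proof.
  intros [[fi [F1 F2]] [Fp Fo]] [[gi [G1 G2]] [Gp Go]].
  split; [exists (fun x => gi (fi x)); split; intros x; [rewrite F1, G1|rewrite G2, F2]; auto|].
  split; intros x; [rewrite Gp, Fp|rewrite Go, Fo]; auto.
Qed.

Lemma in_W_id : in_W d (fun x => x).
Proof. split; [exists (fun x => x); split; auto|apply periodic_odd_id]. Qed.

Lemma in_W_inv y yi : in_W d y -> (forall x, yi (y x) = x) -> (forall x, y (yi x) = x) -> in_W d yi.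
Proof.
  intros Hy H1 H2. split; [exists y; auto|].
  destruct (in_W_periodic_odd y Hy) as [Hp Ho]. split; intros x.
  - rewrite <- (H2 x) at 1. rewrite <- Hp. apply H1.
  - rewrite <- (H2 x) at 1. rewrite <- Ho. apply H1.
Qed.

Lemma sref_in_W j : (j <= d)%nat -> in_W d (sref d j).
Proof.
  intros Hj. split; [|apply sref_periodic_odd].
  exists (sref d j). split; intros; apply sref_invol; auto.
Qed.

Definition valid_word (l : list nat) := forall i, In i l -> (i <= d)%nat.

Lemma valid_word_rev l : valid_word l -> valid_word (rev l).
Proof. intros H i Hi. apply H, in_rev, Hi. Qed.

Lemma word_in_W l : valid_word l -> in_W d (word d l).
Proof.
  induction l as [|i l IH]; intros H; simpl; [apply in_W_id|].
  apply (in_W_comp (sref d i) (word d l)); [apply sref_in_W, H; simpl; auto|].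
  apply IH. intros k Hk; apply H; simpl; auto.
Qed.

Lemma word_app l1 l2 x : word d (l1 ++ l2) x = word d l1 (word d l2 x).
Proof. induction l1; simpl; congruence. Qed.

Lemma word_rev l x : valid_word l -> word d (rev l) (word d l x) = x.
Proof.
  revert x; induction l as [|i l IH]; intros x H; simpl; auto.
  rewrite word_app. simpl. rewrite sref_invol by (apply H; simpl; auto).
  apply IH. intros k Hk; apply H; simpl; auto.
Qed.

Lemma is_len_inv y yi n : (forall x, yi (y x) = x) -> (forall x, y (yi x) = x) ->
  is_len d y n -> is_len d yi n.
Proof.
  intros E1 E2 [[l [H1 [H2 H3]]] H4]. split.
  - exists (rev l). split; [apply valid_word_rev; exact H1|]. split; [rewrite length_rev; auto|].
    intros x. rewrite <- (E2 x) at 1. rewrite <- H3, word_rev; auto.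
  - intros l' Hl' Hw. rewrite <- length_rev. apply H4; [apply valid_word_rev; exact Hl'|].
    intros x. rewrite <- (E1 x) at 1. rewrite <- Hw, word_rev; auto.
Qed.

(** * Coxeter length as an inversion count *)

(* [crossings a b] is the number of multiples of [D] strictly between [a] and [b]. *)
Definition crossings (a b : Z) : Z := Z.max 0 ((b - 1) / D - a / D).

Definition window : list Z := zrange 1 dz ++ zrange (dz + 2) (2 * dz + 1).
Definition window_sym : list Z := zrange 1 dz ++ zrange (- dz) (-1).

(* For [L] a set of representatives of the classes other than [0] and [d+1] mod [D],
   [inv_count_on L y] counts the pairs [a < b] with [a] in [L], [b] in none of these two
   classes and [y a > y b], those with [D | a + b] twice; this is [2 ell(y)] ([is_len_inv_count]). *)
Definition inv_count_on (L : list Z) (y : Z -> Z) : Z :=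
  zsum (fun a => zsum (fun b => crossings (a - b) (y a - y b)) L) L
  + zsum (fun a => crossings (2 * a) (2 * y a)) L.

Definition inv_count (y : Z -> Z) : Z := inv_count_on window y.

Lemma In_window a : In a window <-> (1 <= a <= dz \/ dz + 2 <= a <= 2 * dz + 1).
Proof. unfold window. rewrite in_app_iff, !In_zrange. tauto. Qed.

Lemma In_window_sym a : In a window_sym <-> (1 <= a <= dz \/ - dz <= a <= -1).
Proof. unfold window_sym. rewrite in_app_iff, !In_zrange. tauto. Qed.

Lemma NoDup_window : NoDup window.
Proof. apply NoDup_app; try apply NoDup_zrange. intros x. rewrite !In_zrange. lia. Qed.

Lemma NoDup_window_sym : NoDup window_sym.
Proof. apply NoDup_app; try apply NoDup_zrange. intros x. rewrite !In_zrange. lia. Qed.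

Lemma crossings_shift a b a' b' q : a' = a + q * D -> b' = b + q * D -> crossings a' b' = crossings a b.
Proof.
  intros -> ->. unfold crossings. pose proof DD_pos.
  replace (b + q * D - 1) with ((b - 1) + q * D) by lia. rewrite !Z.div_add by lia. lia.
Qed.

Lemma crossings_refl a : crossings a a = 0.
Proof.
  unfold crossings. pose proof DD_pos. assert ((a - 1) / D <= a / D) by (apply Z.div_le_mono; lia). lia.
Qed.

Lemma crossings_nonneg a b : 0 <= crossings a b.
Proof. unfold crossings; lia. Qed.

Lemma div_DD_small a : - D <= a < D -> a / D = if a <? 0 then -1 else 0.
Proof.
  intros H. destruct (Z.ltb_spec a 0).
  - destruct (DD_div_mod (-1) (a + D)) as [E _]; [lia|]. rewrite <- E. f_equal; lia.
  - destruct (DD_div_mod 0 a) as [E _]; [lia|]. rewrite <- E. f_equal; lia.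
Qed.

Lemma div_DD_one a : D <= a < 2 * D -> a / D = 1.
Proof. intros H. destruct (DD_div_mod 1 (a - D)) as [E _]; [lia|]. rewrite <- E. f_equal; lia. Qed.

Lemma div_DD_pred_sign b : (0 <= (b - 1) / D <-> 0 < b) /\ (1 <= (b - 1) / D <-> D < b).
Proof.
  pose proof DD_pos. split; split; intros H'.
  - destruct (Z.ltb_spec 0 b); auto. assert ((b - 1) / D < 0) by (apply Z.div_lt_upper_bound; lia). lia.
  - apply Z.div_pos; lia.
  - destruct (Z.ltb_spec D b); auto. assert ((b - 1) / D < 1) by (apply Z.div_lt_upper_bound; lia). lia.
  - apply Z.div_le_lower_bound; lia.
Qed.

Lemma crossings_cross0 a a' b : - D <= a < 0 -> 0 <= a' < D ->
  crossings a b - crossings a' b = if 0 <? b then 1 else 0.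
Proof.
  intros Ha Ha'. unfold crossings. rewrite (div_DD_small a), (div_DD_small a') by lia.
  destruct (div_DD_pred_sign b) as [[S1 S2] _].
  destruct (Z.ltb_spec a 0); [|lia]. destruct (Z.ltb_spec a' 0); [lia|]. destruct (Z.ltb_spec 0 b); lia.
Qed.

Lemma crossings_crossD a a' b : 0 <= a < D -> D <= a' < 2 * D ->
  crossings a' b - crossings a b = - if D <? b then 1 else 0.
Proof.
  intros Ha Ha'. unfold crossings. rewrite (div_DD_small a), (div_DD_one a') by lia.
  destruct (div_DD_pred_sign b) as [_ [S1 S2]]. destruct (Z.ltb_spec a 0); [lia|]. destruct (Z.ltb_spec D b); lia.
Qed.

Lemma crossings_same_floor a a' b : a / D = a' / D -> crossings a b - crossings a' b = 0.
Proof. intros E. unfold crossings. rewrite E. lia. Qed.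

Lemma crossings_same_sign a a' b : - D <= a < D -> - D <= a' < D -> (a <? 0) = (a' <? 0) ->
  crossings a b - crossings a' b = 0.
Proof. intros Ha Ha' E. apply crossings_same_floor. rewrite (div_DD_small a), (div_DD_small a'), E by lia. lia. Qed.

Lemma inv_count_window_sym y : periodic_odd y -> inv_count y = inv_count_on window_sym y.
Proof.
  intros [Hp Ho]. unfold inv_count.
  assert (E : window = zrange 1 dz ++ map (fun a => a + D) (zrange (- dz) (-1))).
  { unfold window, zrange. f_equal. rewrite map_map.
    replace (Z.to_nat (-1 - - dz + 1)) with (Z.to_nat (2 * dz + 1 - (dz + 2) + 1)) by (f_equal; lia).
    apply map_ext. intros t. unfold DD. lia. }
  unfold inv_count_on. rewrite E. unfold window_sym. rewrite !zsum_app, !zsum_map.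
  assert (Hin : forall a, zsum (fun b => crossings (a - b) (y a - y b))
                            (zrange 1 dz ++ map (fun a => a + D) (zrange (- dz) (-1)))
            = zsum (fun b => crossings (a - b) (y a - y b)) (zrange 1 dz ++ zrange (- dz) (-1))).
  { intros a. rewrite !zsum_app, zsum_map. f_equal. apply zsum_ext_in. intros b _.
    rewrite Hp. apply (crossings_shift _ _ _ _ (-1)); lia. }
  f_equal; [f_equal|f_equal].
  - apply zsum_ext_in; intros a _; apply Hin.
  - apply zsum_ext_in; intros a _. rewrite Hin, !zsum_app.
    f_equal; apply zsum_ext_in; intros b _; rewrite Hp; apply (crossings_shift _ _ _ _ 1); lia.
  - apply zsum_ext_in. intros a _. rewrite Hp. apply (crossings_shift _ _ _ _ 2); lia.
Qed.

Lemma inv_count_diff L s y : NoDup L -> (forall x, s (s x) = x) -> (forall a, In a L -> In (s a) L) ->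
  inv_count_on L (fun x => y (s x)) - inv_count_on L y =
  zsum (fun a => zsum (fun b => crossings (s a - s b) (y a - y b) - crossings (a - b) (y a - y b)) L) L +
  zsum (fun a => crossings (2 * s a) (2 * y a) - crossings (2 * a) (2 * y a)) L.
Proof.
  intros HL Hs Hp. unfold inv_count_on.
  rewrite (zsum_reindex _ s L HL Hs Hp), (zsum_reindex (fun a => crossings (2 * a) (2 * y (s a))) s L HL Hs Hp).
  assert (E : forall a, zsum (fun b => crossings (s a - b) (y (s (s a)) - y (s b))) L =
                        zsum (fun b => crossings (s a - s b) (y a - y b)) L).
  { intros a. rewrite (zsum_reindex _ s L HL Hs Hp). apply zsum_ext_in. intros b _. rewrite !Hs. reflexivity. }
  rewrite (zsum_ext_in _ _ L (fun a _ => E a)).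
  rewrite (zsum_ext_in (fun x => crossings (2 * s x) (2 * y (s (s x)))) (fun a => crossings (2 * s a) (2 * y a)) L)
    by (intros; rewrite Hs; auto).
  rewrite (zsum_ext_in
             (fun a => zsum (fun b => crossings (s a - s b) (y a - y b) - crossings (a - b) (y a - y b)) L)
             (fun a => zsum (fun b => crossings (s a - s b) (y a - y b)) L
                                   - zsum (fun b => crossings (a - b) (y a - y b)) L) L)
    by (intros; apply zsum_sub).
  rewrite !zsum_sub. lia.
Qed.

Lemma sref0_window_sym a : In a window_sym -> sref d 0 a = if a =? 1 then -1 else if a =? -1 then 1 else a.
Proof.
  rewrite In_window_sym. intros [H|H].
  - rewrite sref_val by lia. unfold sref_base; simpl. case_Z_tests; lia.
  - destruct (sref_periodic_odd 0) as [_ Ho].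
    replace a with (- (- a)) by lia. rewrite Ho, sref_val by lia. unfold sref_base; simpl. case_Z_tests; lia.
Qed.

Lemma srefd_window a : In a window -> sref d d a = if a =? dz then dz + 2 else if a =? dz + 2 then dz else a.
Proof.
  rewrite In_window. intros [H|H].
  - rewrite sref_val by lia. unfold sref_base. rewrite Nat.eqb_refl. destruct (Nat.eqb_spec d 0); [lia|].
    case_Z_tests; lia.
  - replace a with (D - (D - a)) by lia.
    rewrite periodic_odd_mirror, sref_val by (auto using sref_periodic_odd; unfold DD; lia). unfold sref_base.
    rewrite Nat.eqb_refl. destruct (Nat.eqb_spec d 0); [lia|]. unfold DD. case_Z_tests; lia.
Qed.

Lemma sref_window j a : (1 <= j < d)%nat -> In a window ->
  sref d j a = if a =? Z.of_nat j then Z.of_nat j + 1 else if a =? Z.of_nat j + 1 then Z.of_nat j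
    else if a =? D - Z.of_nat j - 1 then D - Z.of_nat j else if a =? D - Z.of_nat j then D - Z.of_nat j - 1 else a.
Proof.
  intros Hj. rewrite In_window. intros [H|H].
  - rewrite sref_val by lia. unfold sref_base. destruct (Nat.eqb_spec j 0); [lia|].
    destruct (Nat.eqb_spec j d); [lia|]. unfold DD. case_Z_tests; lia.
  - replace a with (D - (D - a)) by lia.
    rewrite periodic_odd_mirror, sref_val by (auto using sref_periodic_odd; unfold DD; lia). unfold sref_base.
    destruct (Nat.eqb_spec j 0); [lia|]. destruct (Nat.eqb_spec j d); [lia|]. unfold DD. case_Z_tests; lia.
Qed.

Lemma inv_count_sref0 y : periodic_odd y -> y 1 <> 0 ->
  inv_count (fun x => y (sref d 0 x)) = inv_count y + (if 0 <? y 1 then 2 else -2).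
Proof.
  intros Hy H1.
  rewrite !inv_count_window_sym by auto using periodic_odd_comp, sref_periodic_odd.
  pose proof (inv_count_diff window_sym (sref d 0) y NoDup_window_sym (fun x => sref_invol 0 x (Nat.le_0_l d))
    (fun a Ha => ltac:(rewrite sref0_window_sym by auto; rewrite In_window_sym in *; case_Z_tests; lia))) as E.
  assert (Ho : y (-1) = - y 1) by (destruct Hy as [_ Ho]; apply (Ho 1)).
  assert (In1 : In 1 window_sym) by (apply In_window_sym; lia).
  assert (In1' : In (-1) window_sym) by (apply In_window_sym; lia).
  assert (S : incl [1; -1] window_sym) by (intros x [<-|[<-|[]]]; auto).
  assert (ND : NoDup [1; -1]) by (repeat constructor; simpl; intuition lia).
  rewrite (zsum_support _ window_sym [1; -1] NoDup_window_sym ND S) in E.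
  2:{ intros a Ha Hn. apply zsum_zero. intros b Hb. simpl in Hn.
      rewrite (sref0_window_sym a), (sref0_window_sym b) by auto. rewrite In_window_sym in Ha, Hb.
      apply crossings_same_sign; unfold DD; case_Z_tests; intuition lia. }
  rewrite (zsum_support _ window_sym [1; -1] NoDup_window_sym ND S) in E.
  2:{ intros a Ha Hn. simpl in Hn. rewrite (sref0_window_sym a) by auto. rewrite In_window_sym in Ha.
      case_Z_tests; intuition lia. }
  rewrite !zsum_cons, !zsum_nil in E.
  rewrite (zsum_support1 _ window_sym (-1) NoDup_window_sym In1') in E.
  2:{ intros b Hb Hn. rewrite (sref0_window_sym 1), (sref0_window_sym b) by auto. rewrite In_window_sym in Hb.
      apply crossings_same_sign; unfold DD; case_Z_tests; lia. }
  rewrite (zsum_support1 _ window_sym 1 NoDup_window_sym In1) in E.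
  2:{ intros b Hb Hn. rewrite (sref0_window_sym (-1)), (sref0_window_sym b) by auto. rewrite In_window_sym in Hb.
      apply crossings_same_sign; unfold DD; case_Z_tests; lia. }
  assert (S1 : sref d 0 1 = -1) by (rewrite sref0_window_sym by auto; reflexivity).
  assert (S2 : sref d 0 (-1) = 1) by (rewrite sref0_window_sym by auto; reflexivity).
  rewrite S1, S2, Ho in E.
  assert (B : - D <= -1 - 1 < 0 /\ 0 <= 1 - -1 < D /\ - D <= 2 * -1 < 0 /\ 0 <= 2 * 1 < D) by (unfold DD; lia).
  destruct B as [B1 [B2 [B3 B4]]].
  pose proof (crossings_cross0 _ _ (y 1 - - y 1) B1 B2) as K1.
  pose proof (crossings_cross0 _ _ (- y 1 - y 1) B1 B2) as K2.
  pose proof (crossings_cross0 _ _ (2 * y 1) B3 B4) as K3.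
  pose proof (crossings_cross0 _ _ (2 * - y 1) B3 B4) as K4.
  revert E K1 K2 K3 K4. case_Z_tests; lia.
Qed.

Lemma inv_count_srefd y : periodic_odd y -> y dz <> dz + 1 ->
  inv_count (fun x => y (sref d d x)) = inv_count y + (if y dz <? dz + 1 then 2 else -2).
Proof.
  intros Hy H1. unfold inv_count.
  pose proof (inv_count_diff window (sref d d) y NoDup_window (fun x => sref_invol d x (Nat.le_refl d))
    (fun a Ha => ltac:(rewrite srefd_window by auto; rewrite In_window in *; case_Z_tests; lia))) as E.
  assert (Ho : y (dz + 2) = D - y dz) by (rewrite <- periodic_odd_mirror by auto; f_equal; unfold DD; lia).
  assert (In1 : In dz window) by (apply In_window; lia).
  assert (In2 : In (dz + 2) window) by (apply In_window; lia).
  assert (S : incl [dz; dz + 2] window) by (intros x [<-|[<-|[]]]; auto).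
  assert (ND : NoDup [dz; dz + 2]) by (repeat constructor; simpl; intuition lia).
  rewrite (zsum_support _ window [dz; dz + 2] NoDup_window ND S) in E.
  2:{ intros a Ha Hn. apply zsum_zero. intros b Hb. simpl in Hn.
      rewrite (srefd_window a), (srefd_window b) by auto. rewrite In_window in Ha, Hb.
      apply crossings_same_sign; unfold DD; case_Z_tests; intuition lia. }
  rewrite (zsum_support _ window [dz; dz + 2] NoDup_window ND S) in E.
  2:{ intros a Ha Hn. simpl in Hn. rewrite (srefd_window a) by auto. rewrite In_window in Ha.
      case_Z_tests; intuition lia. }
  rewrite !zsum_cons, !zsum_nil in E.
  rewrite (zsum_support1 _ window (dz + 2) NoDup_window In2) in E.
  2:{ intros b Hb Hn. rewrite (srefd_window dz), (srefd_window b) by auto. rewrite In_window in Hb.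
      apply crossings_same_sign; unfold DD; case_Z_tests; lia. }
  rewrite (zsum_support1 _ window dz NoDup_window In1) in E.
  2:{ intros b Hb Hn. rewrite (srefd_window (dz + 2)), (srefd_window b) by auto. rewrite In_window in Hb.
      apply crossings_same_sign; unfold DD; case_Z_tests; lia. }
  assert (S1 : sref d d dz = dz + 2) by (rewrite srefd_window by auto; case_Z_tests; lia).
  assert (S2 : sref d d (dz + 2) = dz) by (rewrite srefd_window by auto; case_Z_tests; lia).
  rewrite S1, S2, Ho in E.
  assert (B : - D <= dz - (dz + 2) < 0 /\ 0 <= dz + 2 - dz < D /\ 0 <= 2 * dz < D /\ D <= 2 * (dz + 2) < 2 * D)
    by (unfold DD; lia).
  destruct B as [B1 [B2 [B3 B4]]].
  pose proof (crossings_cross0 _ _ (y dz - (D - y dz)) B1 B2) as K1.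
  pose proof (crossings_cross0 _ _ (D - y dz - y dz) B1 B2) as K2.
  pose proof (crossings_crossD _ _ (2 * y dz) B3 B4) as K3.
  pose proof (crossings_crossD _ _ (2 * (D - y dz)) B3 B4) as K4.
  revert E K1 K2 K3 K4. unfold DD. case_Z_tests; lia.
Qed.

Lemma sref_window_double_div j a : (1 <= j < d)%nat -> In a window -> (2 * sref d j a) / D = (2 * a) / D.
Proof.
  intros Hj Ha. rewrite (sref_window j a Hj Ha). rewrite In_window in Ha. destruct Ha as [Ha|Ha].
  - rewrite (div_DD_small (2 * a)) by (unfold DD; lia).
    unfold DD in *. case_Z_tests; rewrite div_DD_small; unfold DD; case_Z_tests; lia.
  - rewrite (div_DD_one (2 * a)) by (unfold DD; lia).
    unfold DD in *. case_Z_tests; rewrite div_DD_one; unfold DD; lia.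
Qed.

Lemma inv_count_sref_mid_diff y j : (1 <= j < d)%nat -> periodic_odd y ->
  let jz := Z.of_nat j in
  inv_count (fun x => y (sref d j x)) - inv_count y =
  2 * (crossings 1 (y jz - y (jz + 1)) - crossings (-1) (y jz - y (jz + 1))) +
  2 * (crossings (-1) (y (jz + 1) - y jz) - crossings 1 (y (jz + 1) - y jz)).
Proof.
  intros Hj Hy jz. unfold inv_count. pose proof (sref_window j) as SM. fold jz in SM.
  pose proof (inv_count_diff window (sref d j) y NoDup_window (fun x => sref_invol j x ltac:(lia))
    (fun a Ha => ltac:(rewrite SM by auto; rewrite In_window in *; unfold DD in *; case_Z_tests; lia))) as E.
  assert (Ho1 : y (D - jz - 1) = D - y (jz + 1)) by (rewrite <- periodic_odd_mirror by auto; f_equal; lia).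
  assert (Ho2 : y (D - jz) = D - y jz) by (rewrite <- periodic_odd_mirror by auto; f_equal; lia).
  assert (In1 : In jz window) by (apply In_window; lia).
  assert (In2 : In (jz + 1) window) by (apply In_window; lia).
  assert (In3 : In (D - jz - 1) window) by (apply In_window; unfold DD; lia).
  assert (In4 : In (D - jz) window) by (apply In_window; unfold DD; lia).
  assert (ND : NoDup [jz; jz + 1; D - jz - 1; D - jz]) by (repeat constructor; simpl; unfold DD; intuition lia).
  assert (S : incl [jz; jz + 1; D - jz - 1; D - jz] window) by (intros x [<-|[<-|[<-|[<-|[]]]]]; auto).
  rewrite (zsum_support _ window _ NoDup_window ND S) in E.
  2:{ intros a Ha Hn. apply zsum_zero. intros b Hb. simpl in Hn.
      rewrite (SM a), (SM b) by auto. rewrite In_window in Ha, Hb.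
      apply crossings_same_sign; unfold DD in *; case_Z_tests; intuition lia. }
  rewrite (zsum_zero (fun a => crossings (2 * sref d j a) (2 * y a) - crossings (2 * a) (2 * y a))) in E.
  2:{ intros a Ha. apply crossings_same_floor, sref_window_double_div; auto. }
  rewrite !zsum_cons, !zsum_nil in E.
  rewrite (zsum_support1 _ window (jz + 1) NoDup_window In2) in E.
  2:{ intros b Hb Hn. rewrite (SM jz), (SM b) by auto. rewrite In_window in Hb.
      apply crossings_same_sign; unfold DD in *; case_Z_tests; lia. }
  rewrite (zsum_support1 _ window jz NoDup_window In1) in E.
  2:{ intros b Hb Hn. rewrite (SM (jz + 1)), (SM b) by auto. rewrite In_window in Hb.
      apply crossings_same_sign; unfold DD in *; case_Z_tests; lia. }
  rewrite (zsum_support1 _ window (D - jz) NoDup_window In4) in E.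
  2:{ intros b Hb Hn. rewrite (SM (D - jz - 1)), (SM b) by auto. rewrite In_window in Hb.
      apply crossings_same_sign; unfold DD in *; case_Z_tests; lia. }
  rewrite (zsum_support1 _ window (D - jz - 1) NoDup_window In3) in E.
  2:{ intros b Hb Hn. rewrite (SM (D - jz)), (SM b) by auto. rewrite In_window in Hb.
      apply crossings_same_sign; unfold DD in *; case_Z_tests; lia. }
  assert (S1 : sref d j jz = jz + 1) by (rewrite SM by auto; case_Z_tests; lia).
  assert (S2 : sref d j (jz + 1) = jz) by (rewrite SM by auto; case_Z_tests; lia).
  assert (S3 : sref d j (D - jz - 1) = D - jz) by (rewrite SM by auto; unfold DD in *; case_Z_tests; lia).
  assert (S4 : sref d j (D - jz) = D - jz - 1) by (rewrite SM by auto; unfold DD in *; case_Z_tests; lia).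
  rewrite S1, S2, S3, S4, Ho1, Ho2 in E.
  replace (jz - (jz + 1)) with (-1) in E by lia. replace (jz + 1 - jz) with 1 in E by lia.
  replace (D - jz - 1 - (D - jz)) with (-1) in E by lia. replace (D - jz - (D - jz - 1)) with 1 in E by lia.
  replace (D - y (jz + 1) - (D - y jz)) with (y jz - y (jz + 1)) in E by lia.
  replace (D - y jz - (D - y (jz + 1))) with (y (jz + 1) - y jz) in E by lia.
  lia.
Qed.

Lemma inv_count_sref_mid y j : (1 <= j < d)%nat -> periodic_odd y -> y (Z.of_nat j) <> y (Z.of_nat j + 1) ->
  inv_count (fun x => y (sref d j x)) = inv_count y + (if y (Z.of_nat j) <? y (Z.of_nat j + 1) then 2 else -2).
Proof.
  intros Hj Hy H1. pose proof (inv_count_sref_mid_diff y j Hj Hy) as E. cbv zeta in E.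
  assert (B : - D <= -1 < 0 /\ 0 <= 1 < D) by (unfold DD; lia). destruct B as [B1 B2].
  pose proof (crossings_cross0 _ _ (y (Z.of_nat j) - y (Z.of_nat j + 1)) B1 B2) as K1.
  pose proof (crossings_cross0 _ _ (y (Z.of_nat j + 1) - y (Z.of_nat j)) B1 B2) as K2.
  revert E K1 K2. case_Z_tests; lia.
Qed.

(* [sref d j] exchanges [sref_lo j < sref_hi j]. *)
Definition sref_lo (j : nat) : Z := if Nat.eqb j 0 then -1 else Z.of_nat j.
Definition sref_hi (j : nat) : Z := if Nat.eqb j 0 then 1 else if Nat.eqb j d then dz + 2 else Z.of_nat j + 1.

Lemma sref_lo_lt_hi j : (j <= d)%nat -> sref_lo j < sref_hi j.
Proof.
  intros. unfold sref_lo, sref_hi. destruct (Nat.eqb_spec j 0); [lia|]. destruct (Nat.eqb_spec j d); lia.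
Qed.

Lemma inv_count_sref y j : (j <= d)%nat -> in_W d y ->
  inv_count (fun x => y (sref d j x)) = inv_count y + (if y (sref_lo j) <? y (sref_hi j) then 2 else -2).
Proof.
  intros Hj Hy. pose proof (in_W_periodic_odd y Hy) as Hp.
  unfold sref_lo, sref_hi. destruct (Nat.eqb_spec j 0) as [->|Hj0]; [|destruct (Nat.eqb_spec j d) as [->|Hjd]].
  - rewrite inv_count_sref0 by (auto; intros E; rewrite <- (periodic_odd_0 y Hp) in E;
                                 apply (in_W_inj y) in E; auto; lia).
    assert (y (-1) = - y 1) by (destruct Hp as [_ Ho]; apply (Ho 1)). case_Z_tests; lia.
  - rewrite inv_count_srefd by (auto; intros E; rewrite <- (periodic_odd_mid y Hp) in E;
                                 apply (in_W_inj y) in E; auto; lia).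
    replace (dz + 2) with (D - dz) by (unfold DD; lia).
    rewrite periodic_odd_mirror by auto. unfold DD in *. case_Z_tests; lia.
  - apply inv_count_sref_mid; auto; try lia. intros E. apply (in_W_inj y) in E; auto. lia.
Qed.

Lemma inv_count_nonneg y : 0 <= inv_count y.
Proof.
  unfold inv_count, inv_count_on.
  pose proof (zsum_nonneg (fun a => crossings (2 * a) (2 * y a)) window (fun a => crossings_nonneg _ _)).
  assert (0 <= zsum (fun a => zsum (fun b => crossings (a - b) (y a - y b)) window) window)
    by (apply zsum_nonneg; intros; apply zsum_nonneg; intros; apply crossings_nonneg).
  lia.
Qed.

Lemma inv_count_id : inv_count (fun x => x) = 0.
Proof.
  unfold inv_count, inv_count_on.
  rewrite !zsum_zero; auto; intros; [apply crossings_refl|]. apply zsum_zero. intros; apply crossings_refl.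
Qed.

Lemma inv_count_ext y y' : (forall x, y x = y' x) -> inv_count y = inv_count y'.
Proof.
  intros E. unfold inv_count, inv_count_on. f_equal.
  - apply zsum_ext_in; intros a _; apply zsum_ext_in; intros b _; rewrite !E; auto.
  - apply zsum_ext_in; intros a _; rewrite !E; auto.
Qed.

Lemma word_snoc l j x : word d (l ++ [j]) x = word d l (sref d j x).
Proof. rewrite word_app. reflexivity. Qed.

Lemma inv_count_word l : valid_word l -> inv_count (word d l) <= 2 * Z.of_nat (length l).
Proof.
  induction l as [|j l IH] using rev_ind; intros H; [simpl; rewrite inv_count_id; lia|].
  assert (Hl : valid_word l) by (intros i Hi; apply H, in_app_iff; auto).
  assert (Hj : (j <= d)%nat) by (apply H, in_app_iff; simpl; auto).
  rewrite (inv_count_ext _ (fun x => word d l (sref d j x))) by (intros; apply word_snoc).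
  rewrite (inv_count_sref (word d l) j Hj (word_in_W l Hl)), length_app.
  specialize (IH Hl). cbn [length]. destruct (_ <? _); lia.
Qed.

Lemma no_descent_id y : in_W d y -> (forall j, (j <= d)%nat -> y (sref_lo j) < y (sref_hi j)) ->
  forall x, y x = x.
Proof.
  intros Hy H. pose proof (in_W_periodic_odd y Hy) as Hp.
  assert (H0 := H 0%nat (Nat.le_0_l _)). unfold sref_lo, sref_hi in H0. simpl in H0.
  assert (y (-1) = - y 1) by (destruct Hp as [_ Ho]; apply (Ho 1)).
  assert (Hd := H d (Nat.le_refl _)). unfold sref_lo, sref_hi in Hd.
  destruct (Nat.eqb_spec d 0); [lia|]. rewrite Nat.eqb_refl in Hd.
  assert (y (dz + 2) = D - y dz) by (rewrite <- periodic_odd_mirror by auto; f_equal; unfold DD; lia).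
  assert (Hm : forall k, (1 <= k < d)%nat -> y (Z.of_nat k) < y (Z.of_nat k + 1)).
  { intros k Hk. specialize (H k ltac:(lia)). unfold sref_lo, sref_hi in H.
    destruct (Nat.eqb_spec k 0); [lia|]. destruct (Nat.eqb_spec k d); [lia|]. auto. }
  assert (Lo : forall k, (k < d)%nat -> Z.of_nat k + 1 <= y (Z.of_nat k + 1)).
  { induction k; intros Hk; [simpl; lia|]. specialize (IHk ltac:(lia)). specialize (Hm (S k) ltac:(lia)).
    replace (Z.of_nat (S k)) with (Z.of_nat k + 1) in * by lia. lia. }
  assert (Hi : forall k, (k < d)%nat -> y (dz - Z.of_nat k) <= dz - Z.of_nat k).
  { induction k; intros Hk; [simpl; rewrite Z.sub_0_r; unfold DD in *; lia|]. specialize (IHk ltac:(lia)).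
    specialize (Hm (d - S k)%nat ltac:(lia)).
    replace (Z.of_nat (d - S k)) with (dz - Z.of_nat (S k)) in Hm by lia.
    replace (dz - Z.of_nat (S k) + 1) with (dz - Z.of_nat k) in Hm by lia. lia. }
  apply (periodic_odd_eq y (fun x => x) Hp periodic_odd_id).
  intros a Ha. specialize (Lo (Z.to_nat (a - 1)) ltac:(lia)). specialize (Hi (Z.to_nat (dz - a)) ltac:(lia)).
  replace (Z.of_nat (Z.to_nat (a - 1)) + 1) with a in Lo by lia.
  replace (dz - Z.of_nat (Z.to_nat (dz - a))) with a in Hi by lia. lia.
Qed.

Lemma descent_dec y : (exists j, (j <= d)%nat /\ ~ y (sref_lo j) < y (sref_hi j)) \/
  (forall j, (j <= d)%nat -> y (sref_lo j) < y (sref_hi j)).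
Proof. apply (bounded_forall_dec (fun j => y (sref_lo j) < y (sref_hi j)) (fun j => Z_lt_dec _ _) d). Qed.

Lemma reduced_word_exists y : in_W d y ->
  exists l, valid_word l /\ (forall x, word d l x = y x) /\ inv_count y = 2 * Z.of_nat (length l).
Proof.
  intros Hy. remember (Z.to_nat (inv_count y)) as n eqn:En. revert y Hy En.
  induction n as [n IH] using (well_founded_induction lt_wf). intros y Hy En.
  destruct (descent_dec y) as [[j [Hj Hdesc]]|Hasc].
  - set (z := fun x => y (sref d j x)).
    assert (Hz : in_W d z) by apply (in_W_comp y (sref d j) Hy (sref_in_W j Hj)).
    pose proof (inv_count_sref y j Hj Hy) as E. fold z in E.
    destruct (Z.ltb_spec (y (sref_lo j)) (y (sref_hi j))); [lia|].
    pose proof (inv_count_nonneg z).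
    destruct (IH (Z.to_nat (inv_count z)) ltac:(lia) z Hz eq_refl) as [l [Hl [Hw HE]]].
    exists (l ++ [j]). split; [intros i Hi; apply in_app_iff in Hi; destruct Hi as [Hi|[<-|[]]]; auto|].
    split.
    + intros x. rewrite word_snoc, Hw. unfold z. rewrite sref_invol; auto.
    + rewrite length_app. cbn [length]. lia.
  - exists []. split; [intros i []|]. split; [intros x; symmetry; apply no_descent_id; auto|].
    rewrite (inv_count_ext _ (fun x => x)) by (apply no_descent_id; auto). rewrite inv_count_id. reflexivity.
Qed.

Lemma is_len_inv_count y : in_W d y -> exists n, is_len d y n /\ inv_count y = 2 * Z.of_nat n.
Proof.
  intros Hy. destruct (reduced_word_exists y Hy) as [l [Hl [Hw HE]]].
  exists (length l). split; auto. split; [exists l; auto|].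
  intros l' Hl' Hw'. pose proof (inv_count_word l' Hl'). rewrite (inv_count_ext _ y Hw') in H. lia.
Qed.

(* [s_j] lies in [W_mu], so [ell (s_j g^-1) = 1 + ell (g^-1)], i.e. [g s_j] is longer than [g]. *)
Lemma in_Dl_inv_ascent mu g ginv : in_W d g -> (forall x, ginv (g x) = x) -> (forall x, g (ginv x) = x) ->
  in_Dl d mu ginv -> forall j, (j <= d)%nat -> ~ excluded mu j -> g (sref_lo j) < g (sref_hi j).
Proof.
  intros Hg G1 G2 [_ HD] j Hj Hex.
  assert (Hw : in_Wsub d mu (sref d j)) by (exists [j]; split; [intros i [<-|[]]; auto|reflexivity]).
  destruct (is_len_inv_count (sref d j) (sref_in_W j Hj)) as [a [Ha Ea]].
  assert (Ea' : inv_count (sref d j) = 2).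
  { rewrite (inv_count_ext _ (fun x => (fun z => z) (sref d j x))) by auto.
    rewrite (inv_count_sref (fun z => z) j Hj in_W_id), inv_count_id.
    pose proof (sref_lo_lt_hi j Hj). case_Z_tests; lia. }
  destruct (is_len_inv_count g Hg) as [b [Hb Eb]].
  set (z := fun x => g (sref d j x)).
  destruct (is_len_inv_count z (in_W_comp g (sref d j) Hg (sref_in_W j Hj))) as [c [Hc Ec]].
  assert (Hc' : is_len d (fun x => sref d j (ginv x)) c).
  { apply (is_len_inv z); [intros x; unfold z; rewrite G1; apply sref_invol; auto
                         |intros x; unfold z; rewrite sref_invol by auto; apply G2|exact Hc]. }
  specialize (HD _ Hw a b c Ha (is_len_inv g ginv b G1 G2 Hb) Hc').
  pose proof (inv_count_sref g j Hj Hg) as E. fold z in E.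
  destruct (Z.ltb_spec (g (sref_lo j)) (g (sref_hi j))); auto. lia.
Qed.

(** * Block functions and parabolic subgroups *)

Definition is_composition (nu : list nat) : Prop := list_sum nu = d.

Section Blocks.
Variable nu : list nat.
Hypothesis Hnu : is_composition nu.

(* [block x] is the index [i] of the interval [R_i^nu] containing [x] (see [In_Rint]):
   on [0..d+1] it counts the partial sums [nu_{0,i}], [i < length nu - 1], below [x]. *)
Definition block_count (t : Z) : Z :=
  Z.of_nat (length (filter (fun i => Z.of_nat (psum nu i) <? t) (seq 0 (length nu - 1)))).
Definition block_period : Z := 2 * Z.of_nat (length nu - 1).
Definition block_rem (rr : Z) : Z :=
  if rr <=? dz + 1 then block_count rr else block_period - block_count (D - rr).
Definition block (x : Z) : Z := x / D * block_period + block_rem (x mod D).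

Lemma block_count_low t : t <= 0 -> block_count t = 0.
Proof. intros H. unfold block_count. rewrite length_filter_none; auto. intros x _. apply Z.ltb_ge. lia. Qed.

Lemma block_count_high t : dz + 1 <= t -> block_count t = Z.of_nat (length nu - 1).
Proof.
  intros H. unfold block_count. rewrite length_filter_all, length_seq; auto.
  intros x _. apply Z.ltb_lt. pose proof (psum_le_sum nu x) as Hx. rewrite Hnu in Hx. lia.
Qed.

Lemma block_count_range t : 0 <= block_count t <= Z.of_nat (length nu - 1).
Proof.
  unfold block_count. pose proof (filter_length_le (fun i => Z.of_nat (psum nu i) <? t) (seq 0 (length nu - 1))).
  rewrite length_seq in H. lia.
Qed.

Lemma block_count_mono t t' : t <= t' -> block_count t <= block_count t'.
Proof.
  intros H. unfold block_count. apply Nat2Z.inj_le.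
  induction (seq 0 (length nu - 1)); simpl; auto.
  destruct (Z.ltb_spec (Z.of_nat (psum nu a)) t); destruct (Z.ltb_spec (Z.of_nat (psum nu a)) t'); simpl; lia.
Qed.

Lemma block_count_step (j : nat) : block_count (Z.of_nat j + 1) = block_count (Z.of_nat j) <-> ~ excluded nu j.
Proof.
  unfold block_count.
  rewrite (length_filter_ext _ (fun i => orb (Z.of_nat (psum nu i) <? Z.of_nat j) (Nat.eqb (psum nu i) j))).
  2:{ intros x _. destruct (Z.ltb_spec (Z.of_nat (psum nu x)) (Z.of_nat j + 1));
      destruct (Z.ltb_spec (Z.of_nat (psum nu x)) (Z.of_nat j)); destruct (Nat.eqb_spec (psum nu x) j); simpl; lia. }
  rewrite length_filter_or by (intros x _ E; apply Z.ltb_lt in E; apply Nat.eqb_neq; lia).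
  split.
  - intros E [i [Hi Hp]].
    assert (In i (filter (fun i => Nat.eqb (psum nu i) j) (seq 0 (length nu - 1))))
      by (apply filter_In; split; [apply in_seq; lia|apply Nat.eqb_eq; auto]).
    destruct (filter (fun i => Nat.eqb (psum nu i) j) _); [contradiction|simpl in E; lia].
  - intros Hn. rewrite (length_filter_none (fun i => Nat.eqb (psum nu i) j)); [lia|].
    intros x Hx. apply Nat.eqb_neq. intros E. apply Hn. exists x. split; auto. apply in_seq in Hx. lia.
Qed.

Lemma block_count_le t m : (m < length nu - 1)%nat ->
  (block_count t <= Z.of_nat m <-> t <= Z.of_nat (psum nu m)).
Proof.
  intros Hm. unfold block_count.
  replace (length nu - 1)%nat with (S m + (length nu - 1 - S m))%nat by lia.
  rewrite seq_app, filter_app, length_app. split.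
  - intros H. destruct (Z_le_gt_dec t (Z.of_nat (psum nu m))); auto.
    rewrite (length_filter_all _ (seq 0 (S m))), length_seq in H; [lia|].
    intros x Hx. apply in_seq in Hx. apply Z.ltb_lt. pose proof (psum_mono nu x m). lia.
  - intros H. rewrite (length_filter_none _ (seq (0 + S m) _)).
    2:{ intros x Hx. apply in_seq in Hx. apply Z.ltb_ge. pose proof (psum_mono nu m x). lia. }
    rewrite seq_S, filter_app, length_app. simpl.
    replace (Z.of_nat (psum nu m) <? t) with false by (symmetry; apply Z.ltb_ge; lia). simpl.
    pose proof (filter_length_le (fun i => Z.of_nat (psum nu i) <? t) (seq 0 m)). rewrite length_seq in H0. lia.
Qed.

Lemma block_qr q rr : 0 <= rr < D -> block (q * D + rr) = q * block_period + block_rem rr.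
Proof. intros H. unfold block. destruct (DD_div_mod q rr H) as [-> ->]. reflexivity. Qed.

Lemma block_rem_range rr : 0 <= block_rem rr <= block_period.
Proof.
  unfold block_rem, block_period. pose proof (block_count_range rr). pose proof (block_count_range (D - rr)).
  case_Z_tests; lia.
Qed.

Lemma block_rem_mono rr rr' : 0 <= rr -> rr <= rr' -> rr' < D -> block_rem rr <= block_rem rr'.
Proof.
  intros H1 H2 H3. unfold block_rem, block_period.
  pose proof (block_count_range rr). pose proof (block_count_range (D - rr')).
  pose proof (block_count_mono rr rr' H2). pose proof (block_count_mono (D - rr') (D - rr) ltac:(lia)).
  case_Z_tests; lia.
Qed.

Lemma block_shift x q : block (x + q * D) = block x + q * block_period.
Proof.
  destruct (DD_euclid x) as [q0 [rr [-> Hr]]].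
  replace (q0 * D + rr + q * D) with ((q0 + q) * D + rr) by lia. rewrite !block_qr by auto. lia.
Qed.

Lemma block_base t : 0 <= t <= dz + 1 -> block t = block_count t.
Proof.
  intros H. replace t with (0 * D + t) at 1 by lia. rewrite block_qr by (unfold DD; lia).
  unfold block_rem. case_Z_tests; lia.
Qed.

Lemma block_odd x : block (- x) = - block x.
Proof.
  destruct (DD_euclid x) as [q [rr [-> Hr]]].
  destruct (Z.eq_dec rr 0) as [->|Hr0].
  - replace (- (q * D + 0)) with ((- q) * D + 0) by lia. rewrite !block_qr by lia.
    unfold block_rem. rewrite block_count_low by lia. case_Z_tests; lia.
  - replace (- (q * D + rr)) with ((- q - 1) * D + (D - rr)) by lia. rewrite !block_qr by lia.
    unfold block_rem, block_period. replace (D - (D - rr)) with rr by lia.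
    case_Z_tests; try (unfold DD in *; lia).
    assert (rr = dz + 1) by (unfold DD in *; lia). subst rr. rewrite !block_count_high by (unfold DD; lia). lia.
Qed.

Lemma block_mirror x : block (D - x) = block_period - block x.
Proof. replace (D - x) with (- x + 1 * D) by lia. rewrite block_shift, block_odd. lia. Qed.

Lemma block_mono x x' : x <= x' -> block x <= block x'.
Proof.
  intros H. destruct (DD_euclid x) as [q [rr [-> Hr]]]. destruct (DD_euclid x') as [q' [rr' [-> Hr']]].
  rewrite !block_qr by auto.
  assert (q <= q') by nia.
  destruct (Z.eq_dec q q') as [->|Hq]; [pose proof (block_rem_mono rr rr'); lia|].
  pose proof (block_rem_range rr). pose proof (block_rem_range rr').
  assert ((q + 1) * block_period <= q' * block_period) by (apply Z.mul_le_mono_nonneg_r; unfold block_period; lia).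
  lia.
Qed.

Lemma block_0 : block 0 = 0.
Proof. rewrite block_base, block_count_low by lia. reflexivity. Qed.

Lemma block_mid : block (dz + 1) = Z.of_nat (length nu - 1).
Proof. rewrite block_base, block_count_high by lia. reflexivity. Qed.

Lemma block_le_iff t m : (m < length nu - 1)%nat -> (block t <= Z.of_nat m <-> t <= Z.of_nat (psum nu m)).
Proof.
  intros Hm. pose proof (psum_le_sum nu m) as Hp. rewrite Hnu in Hp.
  destruct (Z_lt_le_dec t 0).
  - pose proof (block_mono t 0 ltac:(lia)) as Hb. rewrite block_0 in Hb. lia.
  - destruct (Z_le_gt_dec t (dz + 1)).
    + rewrite block_base by lia. apply block_count_le; auto.
    + pose proof (block_mono (dz + 1) t ltac:(lia)) as Hb. rewrite block_mid in Hb. lia.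
Qed.

Lemma block_lo_hi_eq j : (j <= d)%nat ->
  block (sref_lo j) = block (sref_hi j) <-> block_count (Z.of_nat j + 1) = block_count (Z.of_nat j).
Proof.
  intros Hj. unfold sref_lo, sref_hi.
  destruct (Nat.eqb_spec j 0) as [->|Hj0]; [|destruct (Nat.eqb_spec j d) as [->|Hjd]].
  - change (-1) with (- (1)). change (Z.of_nat 0 + 1) with 1.
    rewrite block_odd, block_base, (block_count_low (Z.of_nat 0)) by lia. lia.
  - replace (dz + 2) with (D - dz) by (unfold DD; lia).
    rewrite block_mirror, !block_base, (block_count_high (dz + 1)) by lia. unfold block_period. lia.
  - rewrite !block_base by lia. lia.
Qed.

Lemma excluded_iff_block j : (j <= d)%nat -> (excluded nu j <-> block (sref_lo j) <> block (sref_hi j)).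
Proof.
  intros Hj. rewrite block_lo_hi_eq, block_count_step by auto.
  destruct (excluded_dec nu j); tauto.
Qed.

Lemma block_sref j : (j <= d)%nat -> ~ excluded nu j -> forall x, block (sref d j x) = block x.
Proof.
  intros Hj Hn.
  assert (E : block (sref_lo j) = block (sref_hi j)).
  { destruct (Z.eq_dec (block (sref_lo j)) (block (sref_hi j))); auto. exfalso. apply Hn, excluded_iff_block; auto. }
  assert (U : forall u, 1 <= u <= dz -> block (sref d j u) = block u).
  { intros u Hu. rewrite sref_val by auto. unfold sref_base. unfold sref_lo, sref_hi in E.
    destruct (Nat.eqb_spec j 0) as [->|Hj0]; [|destruct (Nat.eqb_spec j d) as [->|Hjd]];
      case_Z_tests; subst; auto. }
  pose proof (sref_periodic_odd j) as Hs.
  intros x. destruct (DD_euclid x) as [q [t [-> Ht]]].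
  rewrite Z.add_comm, (periodic_odd_shift _ Hs), !block_shift. f_equal.
  destruct (Z.eq_dec t 0) as [->|]; [rewrite periodic_odd_0; auto|].
  destruct (Z_le_gt_dec t dz); [apply U; lia|].
  destruct (Z.eq_dec t (dz + 1)) as [->|]; [rewrite periodic_odd_mid; auto|].
  replace t with (D - (D - t)) by lia.
  rewrite periodic_odd_mirror by auto. rewrite 2!block_mirror, U by (unfold DD in *; lia). reflexivity.
Qed.

(* Right to left: by induction on the length, peeling off descents, which all lie in [W_nu]. *)
Lemma in_Wsub_iff_block y : in_Wsub d nu y <-> in_W d y /\ forall x, block (y x) = block x.
Proof.
  split.
  - intros [l [Hl Hw]]. split.
    + apply (in_W_ext y (word d l)); [intros; symmetry; apply Hw|].
      apply word_in_W. intros i Hi; apply (proj1 (Hl i Hi)).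
    + intros x. rewrite <- Hw. clear Hw. induction l as [|j l IH]; simpl; auto.
      rewrite block_sref; [apply IH|apply (Hl j); simpl; auto..]. intros i Hi; apply Hl; simpl; auto.
  - intros [Hy Hb]. remember (Z.to_nat (inv_count y)) as m eqn:Em. revert y Hy Hb Em.
    induction m as [m IH] using (well_founded_induction lt_wf). intros y Hy Hb Em.
    destruct (descent_dec y) as [[j [Hj Hdesc]]|Hasc].
    + set (z := fun x => y (sref d j x)).
      assert (Hne : ~ excluded nu j).
      { intros Hex. apply excluded_iff_block in Hex; auto. apply Hex.
        pose proof (sref_lo_lt_hi j Hj).
        assert (y (sref_lo j) <> y (sref_hi j)) by (intros E; apply (in_W_inj y) in E; auto; lia).
        pose proof (block_mono (sref_lo j) (sref_hi j) ltac:(lia)).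
        pose proof (block_mono (y (sref_hi j)) (y (sref_lo j)) ltac:(lia)). rewrite !Hb in H2. lia. }
      pose proof (inv_count_sref y j Hj Hy) as E. fold z in E.
      destruct (Z.ltb_spec (y (sref_lo j)) (y (sref_hi j))); [lia|].
      pose proof (inv_count_nonneg z).
      destruct (IH (Z.to_nat (inv_count z)) ltac:(lia) z (in_W_comp y (sref d j) Hy (sref_in_W j Hj))
                  (fun x => ltac:(unfold z; rewrite Hb; apply block_sref; auto)) eq_refl) as [l [Hl Hw]].
      exists (l ++ [j]). split.
      * intros i Hi. apply in_app_iff in Hi. destruct Hi as [Hi|[<-|[]]]; auto.
      * intros x. rewrite word_snoc, Hw. unfold z. rewrite sref_invol; auto.
    + exists []. split; [intros i []|]. intros x; simpl; symmetry; apply no_descent_id; auto.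
Qed.

End Blocks.

(** * The cells [R_j^mu ∩ g^-1 R_i^lam] *)

Section Cells.
Variables lam mu : list nat.
Hypothesis Hlam : is_composition lam.
Hypothesis Hmu : is_composition mu.
Variable g : Z -> Z.
Hypothesis Hg : in_W d g.
(* [g s_j] is longer than [g] for every generator [s_j] of [W_mu] (see [in_Dl_inv_ascent]). *)
Hypothesis Hasc : forall j, (j <= d)%nat -> ~ excluded mu j -> g (sref_lo j) < g (sref_hi j).

Local Notation bl := (block lam).
Local Notation bm := (block mu).

Let Hgp : periodic_odd g := in_W_periodic_odd g Hg.

Lemma g_incr_in_block_base t : 0 <= t <= dz -> bm t = bm (t + 1) -> g t < g (t + 1).
Proof.
  intros Ht E. rewrite !(block_base mu) in E by lia.
  replace t with (Z.of_nat (Z.to_nat t)) in * by lia. set (j := Z.to_nat t) in *.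
  assert (Hn : ~ excluded mu j) by (apply (block_count_step mu); auto).
  specialize (Hasc j ltac:(lia) Hn). unfold sref_lo, sref_hi in Hasc.
  destruct (Nat.eqb_spec j 0) as [E0|E0]; [|destruct (Nat.eqb_spec j d) as [Ed|Ed]].
  - rewrite E0 in *. simpl. rewrite periodic_odd_0 by auto. change (-1) with (- (1)) in Hasc.
    destruct Hgp as [_ Ho]. rewrite Ho in Hasc. lia.
  - rewrite Ed in *. rewrite periodic_odd_mid by auto. replace (dz + 2) with (D - dz) in Hasc by (unfold DD; lia).
    rewrite periodic_odd_mirror in Hasc by auto. unfold DD in Hasc. lia.
  - exact Hasc.
Qed.

Lemma g_incr_in_block x : bm x = bm (x + 1) -> g x < g (x + 1).
Proof.
  intros E. destruct (DD_euclid x) as [q [t [-> Ht]]].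
  replace (q * D + t + 1) with ((t + 1) + q * D) in * by lia.
  rewrite Z.add_comm in *. rewrite !(block_shift mu) in E. rewrite !(periodic_odd_shift g Hgp).
  destruct (Z_le_gt_dec t dz).
  - assert (g t < g (t + 1)) by (apply g_incr_in_block_base; lia). lia.
  - set (u := D - 1 - t).
    replace t with (D - (u + 1)) in * by (unfold u; lia). replace (D - (u + 1) + 1) with (D - u) in * by lia.
    rewrite !(block_mirror mu Hmu) in E. rewrite !(periodic_odd_mirror g) by auto.
    assert (g u < g (u + 1)) by (apply g_incr_in_block_base; unfold u, DD in *; lia). lia.
Qed.

Lemma g_mono_in_block x x' : x <= x' -> bm x = bm x' -> g x <= g x'.
Proof.
  intros H E. replace x' with (x + Z.of_nat (Z.to_nat (x' - x))) in * by lia.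
  induction (Z.to_nat (x' - x)) as [|k IH]; [rewrite Z.add_0_r; lia|].
  replace (x + Z.of_nat (S k)) with ((x + Z.of_nat k) + 1) in * by lia.
  pose proof (block_mono mu x (x + Z.of_nat k) ltac:(lia)).
  pose proof (block_mono mu (x + Z.of_nat k) (x + Z.of_nat k + 1) ltac:(lia)).
  specialize (IH ltac:(lia) ltac:(lia)). pose proof (g_incr_in_block (x + Z.of_nat k) ltac:(lia)). lia.
Qed.

Definition same_cell (x x' : Z) : Prop := bm x = bm x' /\ bl (g x) = bl (g x').

Lemma same_cell_convex x x' z : x <= z -> z < x' -> same_cell x x' -> same_cell z (z + 1).
Proof.
  intros H1 H2 [E1 E2].
  pose proof (block_mono mu x z H1). pose proof (block_mono mu z (z + 1) ltac:(lia)).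
  pose proof (block_mono mu (z + 1) x' ltac:(lia)).
  split; [lia|].
  pose proof (block_mono lam _ _ (g_mono_in_block x z H1 ltac:(lia))).
  pose proof (block_mono lam _ _ (g_mono_in_block z (z + 1) ltac:(lia) ltac:(lia))).
  pose proof (block_mono lam _ _ (g_mono_in_block (z + 1) x' ltac:(lia) ltac:(lia))). lia.
Qed.

Section Refinement.
Variable nu : list nat.
Hypothesis Hnu : is_composition nu.
Hypothesis Hnu_step : forall t, 0 <= t <= dz -> (block nu t = block nu (t + 1) <-> same_cell t (t + 1)).

Lemma block_step_iff_same_cell x : block nu x = block nu (x + 1) <-> same_cell x (x + 1).
Proof.
  destruct (DD_euclid x) as [q [t [-> Ht]]].
  replace (q * D + t + 1) with ((t + 1) + q * D) by lia. rewrite (Z.add_comm (q * D) t).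
  unfold same_cell.
  rewrite !(block_shift nu), !(block_shift mu), !(periodic_odd_shift g Hgp), !(block_shift lam).
  destruct (Z_le_gt_dec t dz).
  - specialize (Hnu_step t ltac:(lia)). unfold same_cell in Hnu_step.
    split; intros H.
    + assert (B : block nu t = block nu (t + 1)) by lia. apply Hnu_step in B. destruct B; split; lia.
    + assert (block nu t = block nu (t + 1)) by (apply Hnu_step; destruct H; split; lia). lia.
  - set (u := D - 1 - t).
    specialize (Hnu_step u ltac:(unfold u, DD in *; lia)). unfold same_cell in Hnu_step.
    replace t with (- (u + 1) + 1 * D) by (unfold u; lia).
    replace (- (u + 1) + 1 * D + 1) with (- u + 1 * D) by lia.
    destruct Hgp as [_ Ho].
    rewrite !(block_shift nu), !(block_shift mu), !(periodic_odd_shift g Hgp), !(block_shift lam),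
      !(block_odd nu Hnu), !(block_odd mu Hmu), !Ho, !(block_odd lam Hlam).
    split; intros H.
    + assert (B : block nu u = block nu (u + 1)) by lia. apply Hnu_step in B. destruct B; split; lia.
    + assert (block nu u = block nu (u + 1)) by (apply Hnu_step; destruct H; split; lia). lia.
Qed.

(* The cells are intervals, so equality of blocks propagates along adjacent points. *)
Lemma block_eq_iff_same_cell x x' : block nu x = block nu x' <-> same_cell x x'.
Proof.
  assert (Hn : forall (k : nat) x, block nu x = block nu (x + Z.of_nat k) <-> same_cell x (x + Z.of_nat k)).
  { induction k as [|k IH]; intros y; [rewrite Z.add_0_r; unfold same_cell; tauto|].
    replace (y + Z.of_nat (S k)) with ((y + Z.of_nat k) + 1) by lia.
    pose proof (block_step_iff_same_cell (y + Z.of_nat k)) as A. split; intros H.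
    + pose proof (block_mono nu y (y + Z.of_nat k) ltac:(lia)).
      pose proof (block_mono nu (y + Z.of_nat k) (y + Z.of_nat k + 1) ltac:(lia)).
      assert (R1 : same_cell y (y + Z.of_nat k)) by (apply IH; lia).
      assert (R2 : same_cell (y + Z.of_nat k) (y + Z.of_nat k + 1)) by (apply A; lia).
      destruct R1, R2; split; congruence.
    + assert (R2 : same_cell (y + Z.of_nat k) (y + Z.of_nat k + 1))
        by (apply (same_cell_convex y (y + Z.of_nat k + 1)); auto; lia).
      assert (R1 : same_cell y (y + Z.of_nat k)) by (destruct H, R2; split; congruence).
      apply IH in R1. apply A in R2. lia. }
  destruct (Z_le_gt_dec x x').
  - replace x' with (x + Z.of_nat (Z.to_nat (x' - x))) by lia. apply Hn.
  - replace x with (x' + Z.of_nat (Z.to_nat (x - x'))) by lia.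
    pose proof (Hn (Z.to_nat (x - x')) x'). unfold same_cell in *. split; intros.
    + destruct H as [H _]. destruct H; [lia|split; congruence].
    + destruct H0. apply eq_sym, H. split; congruence.
Qed.

Lemma in_Wsub_iff_same_cell h : in_Wsub d nu h <-> in_W d h /\ forall x, same_cell (h x) x.
Proof.
  rewrite (in_Wsub_iff_block nu Hnu). split; intros [Hh H]; split; auto; intros x; apply block_eq_iff_same_cell; auto.
Qed.

End Refinement.

Lemma conj_in_Wsub_iff_same_cell ginv h : (forall x, ginv (g x) = x) -> (forall x, g (ginv x) = x) ->
  ((exists w, in_Wsub d lam w /\ forall x, g (h x) = w (g x)) /\ in_Wsub d mu h) <->
  in_W d h /\ forall x, same_cell (h x) x.
Proof.
  intros Hgl Hgr. rewrite (in_Wsub_iff_block mu Hmu). split.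
  - intros [[w [Hw Hgw]] [Hh Hbm]]. split; auto. intros x. split; auto.
    rewrite Hgw. apply (in_Wsub_iff_block lam Hlam), Hw.
  - intros [Hh Hc]. split; [|split; auto; intros x; apply Hc].
    exists (fun z => g (h (ginv z))). split; [|intros x; rewrite Hgl; reflexivity].
    apply (in_Wsub_iff_block lam Hlam). split.
    + apply in_W_comp; auto. apply in_W_comp; auto. apply (in_W_inv g ginv Hg Hgl Hgr).
    + intros z. destruct (Hc (ginv z)) as [_ E]. rewrite E, Hgr. reflexivity.
Qed.

End Cells.

(** * The composition [delta(A)] *)

Section Levels.
Variable f : Z -> Z.
Variable L : nat.
Hypothesis f_step : forall t, 0 <= t <= dz -> f t <= f (t + 1).
Hypothesis f_0 : f 0 = 0.
Hypothesis f_last : f (dz + 1) = Z.of_nat L - 1.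

Lemma f_mono x x' : 0 <= x -> x <= x' -> x' <= dz + 1 -> f x <= f x'.
Proof.
  intros H1 H2 H3. replace x' with (x + Z.of_nat (Z.to_nat (x' - x))) in * by lia.
  induction (Z.to_nat (x' - x)) as [|k IH]; [rewrite Z.add_0_r; lia|].
  replace (x + Z.of_nat (S k)) with ((x + Z.of_nat k) + 1) in * by lia.
  specialize (IH ltac:(lia) ltac:(lia)). specialize (f_step (x + Z.of_nat k) ltac:(lia)). lia.
Qed.

Lemma f_range y : 0 <= y <= dz + 1 -> 0 <= f y <= Z.of_nat L - 1.
Proof. intros H. pose proof (f_mono 0 y). pose proof (f_mono y (dz + 1)). lia. Qed.

Definition level_size (e : nat) : nat := length (filter (fun y => f y =? Z.of_nat e) (zrange 1 dz)).
Definition level_size_le (e : nat) : nat := length (filter (fun y => f y <=? Z.of_nat e) (zrange 1 dz)).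

Definition level_composition : list nat := map level_size (seq 0 L).

Lemma sum_level_size e : list_sum (map level_size (seq 0 (S e))) = level_size_le e.
Proof.
  induction e as [|e IH].
  - simpl. unfold level_size, level_size_le. rewrite Nat.add_0_r. apply length_filter_ext.
    intros y Hy. apply In_zrange in Hy. pose proof (f_range y ltac:(lia)).
    destruct (Z.eqb_spec (f y) 0); destruct (Z.leb_spec (f y) 0); simpl in *; auto; lia.
  - rewrite seq_S, map_app, list_sum_app, IH. simpl. unfold level_size_le, level_size.
    rewrite (length_filter_ext (fun y => f y <=? Z.of_nat (S e))
              (fun y => orb (f y <=? Z.of_nat e) (f y =? Z.of_nat (S e)))).
    2:{ intros y _. destruct (Z.leb_spec (f y) (Z.of_nat (S e))); destruct (Z.leb_spec (f y) (Z.of_nat e));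
        destruct (Z.eqb_spec (f y) (Z.of_nat (S e))); simpl; auto; lia. }
    rewrite length_filter_or; [lia|]. intros y _ H. apply Z.leb_le in H. apply Z.eqb_neq. lia.
Qed.

Lemma length_level_composition : length level_composition = L.
Proof. unfold level_composition. rewrite length_map, length_seq. reflexivity. Qed.

Lemma psum_level_composition e : (e < L)%nat -> psum level_composition e = level_size_le e.
Proof.
  intros H. unfold psum, level_composition. rewrite firstn_map, firstn_seq.
  replace (Nat.min (S e) L) with (S e) by lia. apply sum_level_size.
Qed.

Lemma level_composition_sum : (1 <= L)%nat -> list_sum level_composition = d.
Proof.
  intros HL. rewrite <- (psum_last level_composition (L - 1)) by (rewrite length_level_composition; lia).
  rewrite psum_level_composition by lia. unfold level_size_le.
  rewrite length_filter_all, zrange_length; [lia|].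
  intros y Hy. apply In_zrange in Hy. pose proof (f_range y ltac:(lia)). apply Z.leb_le. lia.
Qed.

Lemma level_size_le_lt e t : (e < L - 1)%nat -> 0 <= t <= dz + 1 ->
  (Z.of_nat (level_size_le e) < t <-> Z.of_nat e < f t).
Proof.
  intros He Ht. unfold level_size_le.
  pose proof (filter_length_le (fun y => f y <=? Z.of_nat e) (zrange 1 dz)) as Hle. rewrite zrange_length in Hle.
  destruct (Z.eq_dec t 0) as [->|H0]; [rewrite f_0; lia|].
  destruct (Z.eq_dec t (dz + 1)) as [->|H1]; [rewrite f_last; lia|].
  split; intros H.
  - destruct (Z_lt_le_dec (Z.of_nat e) (f t)); auto. exfalso.
    rewrite (zrange_split 1 (t + 1) dz), filter_app, length_app in H by lia.
    rewrite (length_filter_all _ (zrange 1 (t + 1 - 1))), zrange_length in H; [lia|].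
    intros y Hy. apply In_zrange in Hy. apply Z.leb_le. pose proof (f_mono y t). lia.
  - rewrite (zrange_split 1 t dz), filter_app, length_app, (length_filter_none _ (zrange t dz)) by
      (try lia; intros y Hy; apply In_zrange in Hy; apply Z.leb_gt; pose proof (f_mono t y); lia).
    pose proof (filter_length_le (fun y => f y <=? Z.of_nat e) (zrange 1 (t - 1))).
    rewrite zrange_length in H2. lia.
Qed.

Lemma block_count_level_composition t : 0 <= t <= dz + 1 -> block_count level_composition t = f t.
Proof.
  intros Ht. unfold block_count. rewrite length_level_composition.
  rewrite (length_filter_ext _ (fun i => Z.of_nat i <? f t)).
  - pose proof (f_range t Ht). rewrite count_lt_seq; lia.
  - intros i Hi. apply in_seq in Hi. rewrite psum_level_composition by lia.
    pose proof (level_size_le_lt i t ltac:(lia) Ht).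
    destruct (Z.ltb_spec (Z.of_nat (level_size_le i)) t); destruct (Z.ltb_spec (Z.of_nat i) (f t)); auto; lia.
Qed.

End Levels.

Section Intervals.
Variable r : nat.
Variable nu : list nat.
Hypothesis Hnu : in_Lambda r d nu.
Let Hc : is_composition nu := proj2 Hnu.

Lemma block_period_Lambda : block_period nu = 2 * Z.of_nat r + 2.
Proof. unfold block_period. rewrite (proj1 Hnu). lia. Qed.

Lemma block_mid_Lambda : block nu (dz + 1) = Z.of_nat r + 1.
Proof. rewrite (block_mid nu Hc), (proj1 Hnu). lia. Qed.

Lemma In_Rbase t (m : nat) : (m <= r + 1)%nat -> (In t (Rbase d r nu m) <-> block nu t = Z.of_nat m).
Proof.
  intros Hm. destruct Hnu as [Hl Hs].
  assert (Hle : forall i, (i <= r)%nat -> (block nu t <= Z.of_nat i <-> t <= Z.of_nat (psum nu i)))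
    by (intros i Hi; apply (block_le_iff nu Hc); lia).
  unfold Rbase. destruct (Nat.eqb_spec m 0) as [->|H0]; [|destruct (Nat.leb_spec m r)]; rewrite In_zrange.
  - pose proof (Hle 0%nat ltac:(lia)). pose proof (block_le_iff nu Hc (- t) 0 ltac:(lia)).
    rewrite (block_odd nu Hc), psum_0 in *. lia.
  - pose proof (Hle m ltac:(lia)). pose proof (Hle (m - 1)%nat ltac:(lia)).
    replace (Z.of_nat (m - 1)) with (Z.of_nat m - 1) in * by lia. lia.
  - assert (m = r + 1)%nat by lia. subst m.
    pose proof (Hle r ltac:(lia)) as Hr.
    pose proof (block_le_iff nu Hc (D - t) r ltac:(lia)) as Hr'.
    rewrite (block_mirror nu Hc), block_period_Lambda in Hr'.
    pose proof (psum_S nu r) as HS. replace (S r) with (r + 1)%nat in HS by lia.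
    pose proof (psum_last nu (r + 1) ltac:(lia)) as Hlast. unfold list_sum, DD in *. lia.
Qed.

Lemma In_Rint x i : In x (Rint d r nu i) <-> block nu x = i.
Proof.
  unfold Rint. cbv zeta. set (np := 2 * Z.of_nat r + 2).
  assert (Hnp : 0 < np) by (unfold np; lia).
  pose proof (Z.div_mod i np ltac:(lia)) as Hi. pose proof (Z.mod_pos_bound i np Hnp) as Hr.
  set (q := i / np) in *. set (rr := i mod np) in *.
  destruct (Z.leb_spec rr (Z.of_nat r + 1)); rewrite in_map_iff; split.
  - intros [y [<- Hy]]. apply In_Rbase in Hy; [|lia].
    rewrite (block_shift nu), block_period_Lambda. unfold np in *. lia.
  - intros E. exists (x - q * D). split; [lia|]. apply In_Rbase; [lia|].
    replace x with (x - q * D + q * D) in E by lia. rewrite (block_shift nu), block_period_Lambda in E.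
    unfold np in *. lia.
  - intros [y [<- Hy]]. apply In_Rbase in Hy; [|lia].
    rewrite (block_shift nu), (block_odd nu Hc), block_period_Lambda. unfold np in *. lia.
  - intros E. exists ((q + 1) * D - x). split; [lia|]. apply In_Rbase; [lia|].
    replace ((q + 1) * D - x) with (- x + (q + 1) * D) by lia.
    rewrite (block_shift nu), (block_odd nu Hc), block_period_Lambda. unfold np in *. lia.
Qed.

End Intervals.

Lemma NoDup_Rint r nu i : NoDup (Rint d r nu i).
Proof.
  assert (forall m, NoDup (Rbase d r nu m))
    by (intros m; unfold Rbase; destruct (Nat.eqb m 0); [|destruct (Nat.leb m r)]; apply NoDup_zrange).
  unfold Rint. cbv zeta. destruct (_ <=? _); apply FinFun.Injective_map_NoDup; auto; intros a b E; lia.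
Qed.

Lemma kappa_eq_count r lam mu g : in_Lambda r d lam -> in_W d g -> forall i j,
  kappa d r lam g mu i j = length (filter (fun y => block lam (g y) =? i) (Rint d r mu j)).
Proof.
  intros Hl Hg i j. unfold kappa.
  rewrite <- (length_map g (filter (fun y => block lam (g y) =? i) (Rint d r mu j))).
  apply NoDup_same_length.
  - apply NoDup_filter, (NoDup_Rint r lam i).
  - apply FinFun.Injective_map_NoDup; [intros a b E; exact (in_W_inj g a b Hg E)|].
    apply NoDup_filter, (NoDup_Rint r mu j).
  - intros x. rewrite filter_In, in_map_iff, existsb_exists. split.
    + intros [Hx [y [Hy E]]]. apply Z.eqb_eq in E. exists y. split; auto. apply filter_In. split; auto.
      apply Z.eqb_eq. rewrite E. apply (In_Rint r lam Hl) in Hx. auto.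
    + intros [y [<- Hy]]. apply filter_In in Hy. destruct Hy as [Hy E]. apply Z.eqb_eq in E.
      split; [apply (In_Rint r lam Hl); auto|]. exists y. split; auto. apply Z.eqb_refl.
Qed.

Lemma aprime_odd (A : Z -> Z -> nat) i c : A i i = (2 * c + 1)%nat -> aprime A i = c.
Proof.
  intros E. unfold aprime. rewrite E. replace (2 * c + 1 - 1)%nat with (c * 2)%nat by lia. apply Nat.div_mul. lia.
Qed.

Section Delta.
Variable r : nat.
Variables lam mu : list nat.
Hypothesis Hlam : in_Lambda r d lam.
Hypothesis Hmu : in_Lambda r d mu.
Variable g : Z -> Z.
Hypothesis Hg : in_W d g.
Hypothesis Hasc : forall j, (j <= d)%nat -> ~ excluded mu j -> g (sref_lo j) < g (sref_hi j).
Variable k : nat -> nat.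
Hypothesis hk : valid_k r (kappa d r lam g mu) k.

Local Notation rz := (Z.of_nat r).
Local Notation bl := (block lam).
Local Notation bm := (block mu).
Local Notation A := (kappa d r lam g mu).

Let Hlc : is_composition lam := proj2 Hlam.
Let Hmc : is_composition mu := proj2 Hmu.
Let Hgp : periodic_odd g := in_W_periodic_odd g Hg.
Let g_mono : forall x x', x <= x' -> bm x = bm x' -> g x <= g x' := g_mono_in_block mu Hmc g Hg Hasc.

Lemma block_mu_range y : 0 <= y <= dz + 1 -> 0 <= bm y <= rz + 1.
Proof.
  intros H. pose proof (block_mono mu 0 y ltac:(lia)). pose proof (block_mono mu y (dz + 1) ltac:(lia)).
  rewrite (block_0 mu), (block_mid_Lambda r mu Hmu) in *. lia.
Qed.

Lemma block_mu_pos y : 1 <= bm y -> 1 <= y.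
Proof.
  intros H. destruct (Z_le_gt_dec y 0); [|lia].
  pose proof (block_mono mu y 0 ltac:(lia)). rewrite (block_0 mu) in *. lia.
Qed.

Lemma block_mu_le_r y : bm y <= rz -> y <= dz.
Proof.
  intros H. destruct (Z_le_gt_dec y dz); [lia|].
  pose proof (block_mono mu (dz + 1) y ltac:(lia)). rewrite (block_mid_Lambda r mu Hmu) in *. lia.
Qed.

Definition cell_size (j i : Z) : nat :=
  length (filter (fun y => andb (bm y =? j) (bl (g y) =? i)) (zrange 1 dz)).

Lemma In_cell y j i : In y (filter (fun y => andb (bm y =? j) (bl (g y) =? i)) (zrange 1 dz)) <->
  1 <= y <= dz /\ bm y = j /\ bl (g y) = i.
Proof. rewrite filter_In, In_zrange, Bool.andb_true_iff, !Z.eqb_eq. tauto. Qed.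

Lemma In_kappa y i j : In y (filter (fun y => bl (g y) =? i) (Rint d r mu j)) <-> bm y = j /\ bl (g y) = i.
Proof. rewrite filter_In, (In_Rint r mu Hmu), Z.eqb_eq. tauto. Qed.

Lemma kappa_cell_size i j : (forall y, bm y = j -> bl (g y) = i -> 1 <= y <= dz) -> A i j = cell_size j i.
Proof.
  intros H. rewrite (kappa_eq_count r lam mu g Hlam Hg). unfold cell_size.
  apply NoDup_same_length; [apply NoDup_filter, NoDup_Rint|apply NoDup_filter, NoDup_zrange|].
  intros y. rewrite In_kappa, In_cell. split; [intros [H1 H2]; auto|tauto].
Qed.

Lemma kappa_mid_col i j : 1 <= j <= rz -> A i j = cell_size j i.
Proof.
  intros Hj. apply kappa_cell_size. intros y H1 _.
  pose proof (block_mu_pos y ltac:(lia)). pose proof (block_mu_le_r y ltac:(lia)). lia.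
Qed.

Lemma kappa_first_col i : 1 <= i -> A i 0 = cell_size 0 i.
Proof.
  intros Hi. apply kappa_cell_size. intros y H1 H2. pose proof (block_mu_le_r y ltac:(lia)).
  destruct (Z_le_gt_dec y 0); [|lia].
  pose proof (block_mono lam _ _ (g_mono y 0 ltac:(lia) ltac:(rewrite (block_0 mu); auto))).
  rewrite (periodic_odd_0 g Hgp), (block_0 lam) in * by auto. lia.
Qed.

Lemma kappa_last_col i : i <= rz -> A i (rz + 1) = cell_size (rz + 1) i.
Proof.
  intros Hi. apply kappa_cell_size. intros y H1 H2. pose proof (block_mu_pos y ltac:(lia)).
  destruct (Z_le_gt_dec y dz); [lia|].
  pose proof (block_mono lam _ _
    (g_mono (dz + 1) y ltac:(lia) ltac:(rewrite (block_mid_Lambda r mu Hmu); auto))).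
  rewrite (periodic_odd_mid g Hgp), (block_mid_Lambda r lam Hlam) in * by auto. lia.
Qed.

(* The cell [(0,0)] is symmetric under [x |-> -x] with fixed point [0]. *)
Lemma kappa_00 : A 0 0 = (2 * cell_size 0 0 + 1)%nat.
Proof.
  set (P := filter (fun y => andb (bm y =? 0) (bl (g y) =? 0)) (zrange 1 dz)).
  assert (HP : forall y, In y P <-> 1 <= y <= dz /\ bm y = 0 /\ bl (g y) = 0) by (intros; apply In_cell).
  transitivity (length (map Z.opp P ++ 0 :: P)).
  2:{ rewrite length_app, length_map. simpl. unfold cell_size. fold P. lia. }
  rewrite (kappa_eq_count r lam mu g Hlam Hg).
  apply NoDup_same_length; [apply NoDup_filter, NoDup_Rint| |].
  - apply NoDup_app.
    + apply FinFun.Injective_map_NoDup; [intros a b E; lia|apply NoDup_filter, NoDup_zrange].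
    + constructor; [rewrite HP; lia|apply NoDup_filter, NoDup_zrange].
    + intros x Hx. apply in_map_iff in Hx. destruct Hx as [z [<- Hz]]. apply HP in Hz. simpl. rewrite HP. lia.
  - intros y. rewrite In_kappa, in_app_iff, in_map_iff. simpl. rewrite HP.
    destruct Hgp as [_ Ho]. split.
    + intros [H1 H2]. pose proof (block_mu_le_r y ltac:(lia)).
      pose proof (block_mu_le_r (- y) ltac:(rewrite (block_odd mu Hmc); lia)).
      destruct (Z_lt_le_dec y 0); [left; exists (- y); rewrite HP, (block_odd mu Hmc), Ho, (block_odd lam Hlc); lia|].
      right. destruct (Z.eq_dec y 0); [left|right]; lia.
    + intros [[z [<- Hz]]|[<-|Hy]]; [apply HP in Hz; rewrite (block_odd mu Hmc), Ho, (block_odd lam Hlc); lia| |lia].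
      rewrite (block_0 mu), (periodic_odd_0 g Hgp), (block_0 lam); auto.
Qed.

(* The cell [(r+1,r+1)] is symmetric under [x |-> D - x] with fixed point [d+1]. *)
Lemma kappa_last_last : A (rz + 1) (rz + 1) = (2 * cell_size (rz + 1) (rz + 1) + 1)%nat.
Proof.
  set (P := filter (fun y => andb (bm y =? rz + 1) (bl (g y) =? rz + 1)) (zrange 1 dz)).
  assert (HP : forall y, In y P <-> 1 <= y <= dz /\ bm y = rz + 1 /\ bl (g y) = rz + 1) by (intros; apply In_cell).
  transitivity (length (map (fun z => D - z) P ++ (dz + 1) :: P)).
  2:{ rewrite length_app, length_map. simpl. unfold cell_size. fold P. lia. }
  rewrite (kappa_eq_count r lam mu g Hlam Hg).
  apply NoDup_same_length; [apply NoDup_filter, NoDup_Rint| |].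
  - apply NoDup_app.
    + apply FinFun.Injective_map_NoDup; [intros a b E; lia|apply NoDup_filter, NoDup_zrange].
    + constructor; [rewrite HP; lia|apply NoDup_filter, NoDup_zrange].
    + intros x Hx. apply in_map_iff in Hx. destruct Hx as [z [<- Hz]]. apply HP in Hz.
      simpl. rewrite HP. unfold DD. lia.
  - pose proof (block_mirror mu Hmc) as Mm. pose proof (block_mirror lam Hlc) as Ml.
    rewrite (block_period_Lambda r mu Hmu) in Mm. rewrite (block_period_Lambda r lam Hlam) in Ml.
    intros y. rewrite In_kappa, in_app_iff, in_map_iff. simpl. rewrite HP. split.
    + intros [H1 H2]. pose proof (block_mu_pos y ltac:(lia)). pose proof (block_mu_pos (D - y) ltac:(rewrite Mm; lia)).
      destruct (Z_le_gt_dec y dz); [right; right; lia|].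
      destruct (Z.eq_dec y (dz + 1)); [right; left; lia|].
      left. exists (D - y). split; [lia|]. apply HP. rewrite Mm, (periodic_odd_mirror g _ Hgp), Ml by auto. unfold DD in *. lia.
    + intros [[z [<- Hz]]|[<-|Hy]]; [apply HP in Hz; rewrite Mm, (periodic_odd_mirror g _ Hgp), Ml by auto; lia| |lia].
      rewrite (block_mid_Lambda r mu Hmu), (periodic_odd_mid g Hgp), (block_mid_Lambda r lam Hlam); auto.
Qed.

(* By [valid_k], the nonzero entries of column [j] of [A] are in the rows
   [col_low j .. col_low j + col_width j - 1]; [delta] lists these entries column after column,
   column [j] starting at position [col_offset j]. *)
Definition col_width (j : nat) : nat :=
  if Nat.eqb j 0 then (k 0 + 1)%nat else if Nat.eqb j (r + 1) then (k (r + 1) + 1)%nat else (2 * k j + 1)%nat.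
Fixpoint col_offset (j : nat) : nat := match j with O => O | S j' => (col_offset j' + col_width j')%nat end.
Definition col_low (j : nat) : Z := if Nat.eqb j 0 then 0 else Z.of_nat j - Z.of_nat (k j).
Definition cell_index (y : Z) : Z := Z.of_nat (col_offset (Z.to_nat (bm y))) + bl (g y) - col_low (Z.to_nat (bm y)).
Definition num_cells : nat := col_offset (r + 2).

Lemma col_width_pos j : (1 <= col_width j)%nat.
Proof. unfold col_width. destruct (Nat.eqb j 0); [lia|]. destruct (Nat.eqb j (r + 1)); lia. Qed.

Lemma col_offset_mono j j' : (j < j')%nat -> (col_offset (S j) <= col_offset j')%nat.
Proof. induction 1; [lia|]. simpl. pose proof (col_width_pos m). simpl in IHle. lia. Qed.

Lemma col_offset_le j j' : (j <= j')%nat -> (col_offset j <= col_offset j')%nat.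
Proof. induction 1; [lia|]. simpl. lia. Qed.

Lemma cell_row_bounds y : 0 <= y <= dz + 1 ->
  col_low (Z.to_nat (bm y)) <= bl (g y) <= col_low (Z.to_nat (bm y)) + Z.of_nat (col_width (Z.to_nat (bm y))) - 1.
Proof.
  intros Hy. pose proof (block_mu_range y Hy) as Hr. unfold col_low, col_width.
  destruct (Z.eq_dec y 0) as [->|Hy0].
  { rewrite (block_0 mu), (periodic_odd_0 g Hgp), (block_0 lam) by auto. simpl. lia. }
  destruct (Z.eq_dec y (dz + 1)) as [->|Hy1].
  { rewrite (block_mid_Lambda r mu Hmu), (periodic_odd_mid g Hgp), (block_mid_Lambda r lam Hlam) by auto.
    replace (Z.to_nat (rz + 1)) with (r + 1)%nat by lia.
    destruct (Nat.eqb_spec (r + 1) 0); [lia|]. rewrite Nat.eqb_refl. lia. }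
  assert (Hk : Z.abs (bl (g y) - bm y) <= Z.of_nat (k (Z.to_nat (bm y)))).
  { pose proof (hk (bl (g y)) (Z.to_nat (bm y)) ltac:(lia)) as Hk.
    replace (Z.of_nat (Z.to_nat (bm y))) with (bm y) in Hk by lia. apply Hk.
    rewrite (kappa_eq_count r lam mu g Hlam Hg). intros E. apply length_zero_iff_nil in E.
    assert (In y (filter (fun y0 => bl (g y0) =? bl (g y)) (Rint d r mu (bm y)))) by (apply In_kappa; auto).
    rewrite E in H. contradiction. }
  destruct (Nat.eqb_spec (Z.to_nat (bm y)) 0) as [E0|E0].
  - pose proof (block_mono lam _ _ (g_mono 0 y ltac:(lia) ltac:(rewrite (block_0 mu); lia))).
    rewrite (periodic_odd_0 g Hgp), (block_0 lam) in * by auto. rewrite E0 in Hk. lia.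
  - destruct (Nat.eqb_spec (Z.to_nat (bm y)) (r + 1)) as [E1|E1]; [|lia].
    pose proof (block_mono lam _ _
      (g_mono y (dz + 1) ltac:(lia) ltac:(rewrite (block_mid_Lambda r mu Hmu); lia))).
    rewrite (periodic_odd_mid g Hgp), (block_mid_Lambda r lam Hlam) in * by auto. rewrite E1 in *. lia.
Qed.

Lemma cell_index_range y : 0 <= y <= dz + 1 ->
  Z.of_nat (col_offset (Z.to_nat (bm y))) <= cell_index y <= Z.of_nat (col_offset (S (Z.to_nat (bm y)))) - 1.
Proof. intros Hy. pose proof (cell_row_bounds y Hy). unfold cell_index. simpl. lia. Qed.

Lemma cell_index_0 : cell_index 0 = 0.
Proof. unfold cell_index. rewrite (block_0 mu), (periodic_odd_0 g Hgp), (block_0 lam) by auto. reflexivity. Qed.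

Lemma cell_index_last : cell_index (dz + 1) = Z.of_nat num_cells - 1.
Proof.
  unfold cell_index, num_cells.
  rewrite (block_mid_Lambda r mu Hmu), (periodic_odd_mid g Hgp), (block_mid_Lambda r lam Hlam) by auto.
  replace (Z.to_nat (rz + 1)) with (r + 1)%nat by lia. replace (r + 2)%nat with (S (r + 1)) by lia.
  simpl. unfold col_low, col_width. destruct (Nat.eqb_spec (r + 1) 0); [lia|]. rewrite Nat.eqb_refl. lia.
Qed.

Lemma cell_index_step t : 0 <= t <= dz ->
  cell_index t <= cell_index (t + 1) /\ (cell_index t = cell_index (t + 1) <-> same_cell lam mu g t (t + 1)).
Proof.
  intros Ht. pose proof (cell_index_range t ltac:(lia)). pose proof (cell_index_range (t + 1) ltac:(lia)).
  pose proof (block_mono mu t (t + 1) ltac:(lia)).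
  pose proof (block_mu_range t ltac:(lia)). pose proof (block_mu_range (t + 1) ltac:(lia)).
  unfold same_cell. destruct (Z.eq_dec (bm t) (bm (t + 1))) as [E|E].
  - pose proof (block_mono lam _ _ (g_mono t (t + 1) ltac:(lia) E)).
    unfold cell_index. rewrite E. split; [lia|]. split; [intros; split; auto; lia|intros [_ ?]; lia].
  - pose proof (col_offset_mono (Z.to_nat (bm t)) (Z.to_nat (bm (t + 1))) ltac:(lia)).
    split; [lia|]. split; [lia|intros [? _]; contradiction].
Qed.

Lemma level_size_cell_index j t : (j <= r + 1)%nat -> (t < col_width j)%nat ->
  level_size cell_index (col_offset j + t) = cell_size (Z.of_nat j) (col_low j + Z.of_nat t).
Proof.
  intros Hj Ht. unfold level_size, cell_size. apply length_filter_ext. intros y Hy. apply In_zrange in Hy.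
  pose proof (cell_index_range y ltac:(lia)) as IR. pose proof (block_mu_range y ltac:(lia)) as BR.
  set (j' := Z.to_nat (bm y)) in *.
  assert (Ej : bm y = Z.of_nat j') by (unfold j'; lia).
  destruct (lt_eq_lt_dec j' j) as [[Hlt|<-]|Hgt].
  - pose proof (col_offset_mono j' j Hlt).
    destruct (Z.eqb_spec (cell_index y) (Z.of_nat (col_offset j + t))); [lia|].
    destruct (Z.eqb_spec (bm y) (Z.of_nat j)); [lia|]. reflexivity.
  - unfold cell_index. fold j'.
    destruct (Z.eqb_spec (Z.of_nat (col_offset j') + bl (g y) - col_low j') (Z.of_nat (col_offset j' + t)));
    destruct (Z.eqb_spec (bm y) (Z.of_nat j')); destruct (Z.eqb_spec (bl (g y)) (col_low j' + Z.of_nat t));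
    simpl; lia.
  - pose proof (col_offset_mono j j' Hgt). simpl in H.
    destruct (Z.eqb_spec (cell_index y) (Z.of_nat (col_offset j + t))); [lia|].
    destruct (Z.eqb_spec (bm y) (Z.of_nat j)); [lia|]. reflexivity.
Qed.

Lemma delta_first_col : aprime A 0 :: map (fun t => A (Z.of_nat t) 0) (seq 1 (k 0%nat)) =
  map (level_size cell_index) (seq 0 (col_width 0)).
Proof.
  unfold col_width. simpl Nat.eqb. cbv iota. rewrite Nat.add_1_r. simpl seq. simpl map. f_equal.
  - pose proof (level_size_cell_index 0 0 ltac:(lia) ltac:(unfold col_width; simpl; lia)) as E.
    simpl in E. rewrite E. apply aprime_odd, kappa_00.
  - apply map_seq_eq. intros t Ht.
    change (level_size cell_index (1 + t)) with (level_size cell_index (col_offset 0 + (1 + t))).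
    rewrite level_size_cell_index by (unfold col_width; simpl; lia).
    unfold col_low. simpl Nat.eqb. cbv iota. rewrite kappa_first_col by lia. f_equal.
Qed.

Lemma delta_mid_col j : (1 <= j <= r)%nat ->
  map (fun t => A (Z.of_nat j - Z.of_nat (k j) + Z.of_nat t) (Z.of_nat j)) (seq 0 (2 * k j + 1)) =
  map (level_size cell_index) (seq (col_offset j) (col_width j)).
Proof.
  intros Hj. assert (EW : col_width j = (2 * k j + 1)%nat).
  { unfold col_width. destruct (Nat.eqb_spec j 0); [lia|]. destruct (Nat.eqb_spec j (r + 1)); [lia|]. auto. }
  rewrite EW. apply map_seq_eq. intros t Ht.
  rewrite level_size_cell_index by lia. unfold col_low. destruct (Nat.eqb_spec j 0); [lia|].
  rewrite kappa_mid_col by lia. f_equal; lia.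
Qed.

Lemma delta_mid_cols m : (m <= r)%nat ->
  concat (map (fun j => map (fun t => A (Z.of_nat j - Z.of_nat (k j) + Z.of_nat t) (Z.of_nat j))
                            (seq 0 (2 * k j + 1))) (seq 1 m))
  = map (level_size cell_index) (seq (col_offset 1) (col_offset (S m) - col_offset 1)).
Proof.
  induction m as [|m IH]; intros Hm; [replace (col_offset 1 - col_offset 1)%nat with 0%nat by lia; reflexivity|].
  rewrite seq_S, map_app, concat_app, IH by lia. cbn [map concat]. rewrite app_nil_r.
  rewrite (delta_mid_col (1 + m)) by lia.
  pose proof (col_offset_le 1 (S m) ltac:(lia)).
  change (col_offset (S (S m))) with (col_offset (S m) + col_width (S m))%nat.
  replace (col_offset (S m) + col_width (S m) - col_offset 1)%nat
    with ((col_offset (S m) - col_offset 1) + col_width (S m))%nat by lia.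
  rewrite seq_app, map_app. f_equal.
  replace (col_offset 1 + (col_offset (S m) - col_offset 1))%nat with (col_offset (S m)) by lia.
  reflexivity.
Qed.

Lemma delta_last_col :
  map (fun t => A (rz + 1 - Z.of_nat (k (r + 1)%nat) + Z.of_nat t) (rz + 1)) (seq 0 (k (r + 1)%nat))
    ++ [aprime A (rz + 1)]
  = map (level_size cell_index) (seq (col_offset (r + 1)) (col_width (r + 1))).
Proof.
  assert (EW : col_width (r + 1) = (k (r + 1) + 1)%nat).
  { unfold col_width. destruct (Nat.eqb_spec (r + 1) 0); [lia|]. rewrite Nat.eqb_refl. auto. }
  assert (EL : col_low (r + 1) = rz + 1 - Z.of_nat (k (r + 1)%nat)).
  { unfold col_low. destruct (Nat.eqb_spec (r + 1) 0); [lia|]. lia. }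
  rewrite EW, (Nat.add_1_r (k (r + 1)%nat)), seq_S, map_app. f_equal.
  - apply map_seq_eq. intros t Ht. rewrite level_size_cell_index, EL, kappa_last_col by lia. f_equal; lia.
  - simpl. f_equal. rewrite level_size_cell_index, EL by lia. apply aprime_odd.
    replace (Z.of_nat (r + 1)) with (rz + 1) by lia.
    replace (rz + 1 - Z.of_nat (k (r + 1)%nat) + Z.of_nat (k (r + 1)%nat)) with (rz + 1) by lia.
    apply kappa_last_last.
Qed.

Lemma delta_eq : delta r A k = level_composition cell_index num_cells.
Proof.
  unfold delta, level_composition, num_cells.
  rewrite delta_first_col, delta_mid_cols, delta_last_col by lia.
  pose proof (col_offset_le 1 (S r) ltac:(lia)).
  assert (E : col_offset (r + 2) = (col_width 0 + (col_offset (S r) - col_offset 1) + col_width (r + 1))%nat).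
  { replace (r + 2)%nat with (S (r + 1)) by lia. simpl col_offset at 1. replace (r + 1)%nat with (S r) by lia.
    simpl in H |- *. lia. }
  assert (E1 : col_offset 1 = col_width 0) by reflexivity.
  assert (E2 : col_offset (r + 1) = (0 + (col_width 0 + (col_offset (S r) - col_offset 1)))%nat).
  { replace (r + 1)%nat with (S r) by lia. lia. }
  rewrite E, !seq_app, !map_app, <- app_assoc, E2, E1. reflexivity.
Qed.

Lemma in_Wsub_delta_iff h : in_Wsub d (delta r A k) h <-> in_W d h /\ forall x, same_cell lam mu g (h x) x.
Proof.
  assert (Hstep : forall t, 0 <= t <= dz -> cell_index t <= cell_index (t + 1))
    by (intros t Ht; apply (cell_index_step t Ht)).
  assert (Hc : is_composition (level_composition cell_index num_cells)).
  { apply level_composition_sum; auto using cell_index_0, cell_index_last.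
    unfold num_cells. pose proof (col_offset_le 1 (r + 2) ltac:(lia)). pose proof (col_width_pos 0).
    simpl in H. lia. }
  rewrite delta_eq. apply (in_Wsub_iff_same_cell lam mu Hlc Hmc g Hg Hasc _ Hc).
  intros t Ht.
  rewrite !block_base, !(block_count_level_composition cell_index num_cells Hstep cell_index_0 cell_index_last)
    by lia.
  apply cell_index_step, Ht.
Qed.

End Delta.
End AffineC.

Theorem proposition2p5p3 (r d : nat) (hd : (2 <= d)%nat)
  (lam mu : list nat) (hlam : in_Lambda r d lam) (hmu : in_Lambda r d mu)
  (g : Z -> Z) (hg : in_W d g) (hD : in_Dlm d lam mu g)
  (k : nat -> nat) (hk : valid_k r (kappa d r lam g mu) k) :
  forall h : Z -> Z,
    in_Wsub d (delta r (kappa d r lam g mu) k) h <->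
    ((exists w, in_Wsub d lam w /\ forall x, g (h x) = w (g x)) /\ in_Wsub d mu h).
Proof.
  destruct hD as [_ [ginv [Hgl [Hgr HDmu]]]].
  pose proof (in_Dl_inv_ascent d hd mu g ginv hg Hgl Hgr HDmu) as Hasc.
  intros h. rewrite (in_Wsub_delta_iff d hd r lam mu hlam hmu g hg Hasc k hk h).
  symmetry. apply (conj_in_Wsub_iff_same_cell d hd lam mu (proj2 hlam) (proj2 hmu) g hg ginv h Hgl Hgr).
Qed.
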